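(* Let $n,m\ge1$, $p_{n,m}$ stable of degree $n$ in $z$ and $m$ in $w$, and $0\le k\le m-1$. Then $a_k$ satisfies: (a) $a_k\in\operatorname{span}\{z^iw^j:0\le i\le 2n,\ 0\le j\le m-1\}$; (b) in $L^2\!\left(\frac{d\sigma}{|p_{n,m}|^2}\right)$, $a_k$ is orthogonal to all $z^iw^j$ with $0\le i\le 2n$, $0\le j\le m-1$, $j\ne k$, and to all $z^iw^k$ with $0\le i\le 2n$, $i\ne n$; (c) $\|a_k\|^2=\int_{-\pi}^{\pi}T_{k,k}(e^{i\theta})\,\frac{d\theta}{2\pi}$, the norm taken in $L^2\!\left(\frac{d\sigma}{|p_{n,m}|^2}\right)$. Moreover, any polynomial $f$ satisfying (a), (b), (c) (with $f$ in place of $a_k$) is of the form $f=c\,a_k$ with $|c|=1$.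
   Context: $\sigma$ is normalized Lebesgue measure on $\mathbb{T}^2$; $p_{n,m}$ is stable if it has no zeros in $\{|z|\le1,|w|\le1\}$. Write $p_{n,m}(z,w)=\sum_{i=0}^m p_i(z)w^i$ and $\bar p_i(z)=\overline{p_i(\bar z)}$. Set $\tilde p_{n,m}(z,w)=z^nw^m\overline{p_{n,m}(1/\bar z,1/\bar w)}$, $L(z,w;\eta)=z^n\frac{p_{n,m}(z,w)\overline{p_{n,m}(1/\bar z,\eta)}-\tilde p_{n,m}(z,w)\overline{\tilde p_{n,m}(1/\bar z,\eta)}}{1-w\bar\eta}$ (a polynomial in $z,w,\bar\eta$), and define $a_j$ by $L=\sum_{j=0}^{m-1}a_j(z,w)\bar\eta^j$. $T_m(z)$ is the $m\times m$ matrix (rows and columns indexed $0,\dots,m-1$) $T_m(z)=M_1M_2-M_3M_4$, where $M_1$ is lower triangular with $(r,s)$ entry $p_{r-s}(z)$ for $r\ge s$; $M_2$ is upper triangular with $(r,s)$ entry $\bar p_{s-r}(1/z)$ for $s\ge r$; $M_3$ is lower triangular with $(r,s)$ entry $\bar p_{m-r+s}(1/z)$ for $r\ge s$; $M_4$ is upper triangular with $(r,s)$ entry $p_{m-s+r}(z)$ for $s\ge r$. $T_{k,k}$ denotes its $(k,k)$ entry. *)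

From Stdlib Require Import Reals ClassicalEpsilon.
Open Scope R_scope.

Record Cplx := mkC { CRe : R; CIm : R }.
Definition C0 : Cplx := mkC 0 0.
Definition C1 : Cplx := mkC 1 0.
Definition Cadd (x y : Cplx) := mkC (CRe x + CRe y) (CIm x + CIm y).
Definition Csub (x y : Cplx) := mkC (CRe x - CRe y) (CIm x - CIm y).
Definition Cmul (x y : Cplx) :=
  mkC (CRe x * CRe y - CIm x * CIm y) (CRe x * CIm y + CIm x * CRe y).
Definition Cscale (r : R) (x : Cplx) := mkC (r * CRe x) (r * CIm x).
Definition Cconj (x : Cplx) := mkC (CRe x) (- CIm x).
Definition Cnorm2 (x : Cplx) := CRe x * CRe x + CIm x * CIm x.
Definition Cabs (x : Cplx) := sqrt (Cnorm2 x).
Definition Cinv (x : Cplx) := mkC (CRe x / Cnorm2 x) (- CIm x / Cnorm2 x).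
Fixpoint Cpow (x : Cplx) (n : nat) : Cplx :=
  match n with O => C1 | S n' => Cmul x (Cpow x n') end.
Definition Cexpi (t : R) : Cplx := mkC (cos t) (sin t).

(* csum N f = f 0 + f 1 + ... + f N  (N+1 terms) *)
Fixpoint csum (N : nat) (f : nat -> Cplx) : Cplx :=
  match N with O => f O | S N' => Cadd (csum N' f) (f N) end.

Definition peval2 (P : nat -> nat -> Cplx) (N M : nat) (z w : Cplx) : Cplx :=
  csum N (fun i => csum M (fun j => Cmul (P i j) (Cmul (Cpow z i) (Cpow w j)))).

Definition coeffs_bounded (n m : nat) (P : nat -> nat -> Cplx) : Prop :=
  forall i j, (n < i)%nat \/ (m < j)%nat -> P i j = C0.
Definition exact_degree (n m : nat) (P : nat -> nat -> Cplx) : Prop :=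
  (exists j, P n j <> C0) /\ (exists i, P i m <> C0).
Definition stable (n m : nat) (P : nat -> nat -> Cplx) : Prop :=
  forall z w, Cnorm2 z <= 1 -> Cnorm2 w <= 1 -> peval2 P n m z w <> C0.

(* p_i(z), the coefficient of w^i:  p(z,w) = sum_i p_i(z) w^i *)
Definition pw (n : nat) (P : nat -> nat -> Cplx) (i : nat) (z : Cplx) : Cplx :=
  csum n (fun i' => Cmul (P i' i) (Cpow z i')).
(* \bar p_i(z) = conj (p_i (conj z)) *)
Definition pbarw (n : nat) (P : nat -> nat -> Cplx) (i : nat) (z : Cplx) : Cplx :=
  csum n (fun i' => Cmul (Cconj (P i' i)) (Cpow z i')).

(* coefficients of the reflection  ~p(z,w) = z^n w^m conj(p(1/conj z, 1/conj w)) *)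
Definition Pt (n m : nat) (P : nat -> nat -> Cplx) (i j : nat) : Cplx :=
  if andb (Nat.leb i n) (Nat.leb j m) then Cconj (P (n - i)%nat (m - j)%nat) else C0.

(* Coefficient of z^i w^j conj(eta)^l in the numerator
   Q = z^n ( p(z,w) conj(p(1/conj z,eta)) - ~p(z,w) conj(~p(1/conj z,eta)) ). *)
Definition qcoef (n m : nat) (P : nat -> nat -> Cplx) (i j l : nat) : Cplx :=
  if andb (Nat.leb j m) (Nat.leb l m) then
    csum n (fun i1 => csum n (fun i2 =>
      if Nat.eqb (i1 + n)%nat (i + i2)%nat then
        Csub (Cmul (P i1 j) (Cconj (P i2 l)))
             (Cmul (Pt n m P i1 j) (Cconj (Pt n m P i2 l)))
      else C0))
  else C0.

(* L = Q / (1 - w conj(eta)) = Q * sum_t (w conj(eta))^t  (exact quotient);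
   acoef k i j = coefficient of z^i w^j in a_k, where L = sum_k a_k conj(eta)^k. *)
Definition acoef (n m : nat) (P : nat -> nat -> Cplx) (k i j : nat) : Cplx :=
  csum (Nat.min j k) (fun t => qcoef n m P i (j - t)%nat (k - t)%nat).

Definition RInt (f : R -> R) (a b : R) : R :=
  epsilon (inhabits 0)
    (fun v => exists pr : Riemann_integrable f a b, RiemannInt pr = v).
Definition CInt (f : R -> Cplx) (a b : R) : Cplx :=
  mkC (RInt (fun t => CRe (f t)) a b) (RInt (fun t => CIm (f t)) a b).
Definition torus_int (F : Cplx -> Cplx -> Cplx) : Cplx :=
  Cscale (/ (4 * PI ^ 2))
    (CInt (fun t => CInt (fun s => F (Cexpi t) (Cexpi s)) (- PI) PI) (- PI) PI).

Definition ip (n m : nat) (P : nat -> nat -> Cplx) (F G : Cplx -> Cplx -> Cplx)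
  : Cplx :=
  torus_int (fun z w =>
    Cscale (/ Cnorm2 (peval2 P n m z w)) (Cmul (F z w) (Cconj (G z w)))).
Definition norm2 (n m : nat) (P : nat -> nat -> Cplx) (F : Cplx -> Cplx -> Cplx)
  : R := CRe (ip n m P F F).

Definition M1 n (P : nat -> nat -> Cplx) z (r s : nat) : Cplx :=
  if Nat.leb s r then pw n P (r - s)%nat z else C0.
Definition M2 n (P : nat -> nat -> Cplx) z (r s : nat) : Cplx :=
  if Nat.leb r s then pbarw n P (s - r)%nat (Cinv z) else C0.
Definition M3 n m (P : nat -> nat -> Cplx) z (r s : nat) : Cplx :=
  if Nat.leb s r then pbarw n P (m - r + s)%nat (Cinv z) else C0.
Definition M4 n m (P : nat -> nat -> Cplx) z (r s : nat) : Cplx :=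
  if Nat.leb r s then pw n P (m - s + r)%nat z else C0.
(* entry (r,s) of T_m(z) = M1 M2 - M3 M4, indices 0..m-1 *)
Definition Tm (n m : nat) (P : nat -> nat -> Cplx) (z : Cplx) (r s : nat) : Cplx :=
  csum (m - 1)%nat (fun u =>
    Csub (Cmul (M1 n P z r u) (M2 n P z u s))
         (Cmul (M3 n m P z r u) (M4 n m P z u s))).

Definition monomial (i j : nat) (z w : Cplx) : Cplx := Cmul (Cpow z i) (Cpow w j).

(* Conditions (a), (b), (c) for a polynomial with coefficient function f.
   Under (a), f is the polynomial  peval2 f (2n) (m-1). *)
Definition cond_abc (n m : nat) (P : nat -> nat -> Cplx) (k : nat)
  (f : nat -> nat -> Cplx) : Prop :=
  let F := peval2 f (2 * n)%nat (m - 1)%nat in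
  (forall i j, (2 * n < i)%nat \/ (m - 1 < j)%nat -> f i j = C0) /\
  (forall i j, (i <= 2 * n)%nat -> (j <= m - 1)%nat -> j <> k ->
     ip n m P F (monomial i j) = C0) /\
  (forall i, (i <= 2 * n)%nat -> i <> n ->
     ip n m P F (monomial i k) = C0) /\
  mkC (norm2 n m P F) 0 =
    Cscale (/ (2 * PI)) (CInt (fun t => Tm n m P (Cexpi t) k k) (- PI) PI).

(* Fix z on the unit circle and let q_z(w) = p(z,w) = sum_j p_j(z) w^j;
   by stability q_z has no zero in the closed unit disk.  An algebraic computation gives
     a_k(z,w) = z^n sum_(t<=k) w^t (q_z(w) conj p_(k-t)(z) - w^m conj q_z(w) p_(m-k+t)(z))
   on the torus (lemma [acoef_on_torus]).  Dividing by |q_z|^2 and integrating against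
   conj(w^j) over the circle, every term of the second kind is a mean  int w^r / q_z(w)  with
   r >= 1, which vanishes by the mean value property (lemma [mean_mono_over_poly]: the mean
   of x^r / q_z(x) over the circle of radius u has zero u-derivative, since the radial
   derivative is a multiple of the angular one, and it vanishes at u = 0), and the first kind sums up to 2 pi delta_jk (lemma [wfourier_delta]).  Integrating in z then gives
   <a_k, z^i w^j> = delta_in delta_jk (lemma [ip_acoef_monomial]), which is (b); expanding
   a_k in monomials yields ||a_k||^2 = a_k[n,k], and Fourier inversion in z computes a_k[n,k]
   as the mean of T_kk (lemma [acoef_center]), which is (c).  Uniqueness: if f satisfies
   (a)-(c) and c = <f, z^n w^k>, then f - c a_k is orthogonal to its own monomials, so it has
   norm 0 and vanishes; (c) then forces |c| = 1 unless a_k = 0. *)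

From Stdlib Require Import Reals Lra Lia ClassicalEpsilon FunctionalExtensionality.
From Coquelicot Require Import Hierarchy Continuity Derive RInt RInt_analysis AutoDerive.
From Pilot Require Import Defs.
Open Scope R_scope.

Lemma Cplx_eq x y : CRe x = CRe y -> CIm x = CIm y -> x = y.
Proof. destruct x, y; simpl; intros -> ->; reflexivity. Qed.

Ltac csimpl := unfold Cadd, Csub, Cmul, Cscale, Cconj, C0, C1, Cnorm2 in *; cbn [CRe CIm] in *.
Ltac cring := apply Cplx_eq; csimpl; ring.

Lemma Cadd_0_l x : Cadd C0 x = x. Proof. cring. Qed.
Lemma Cadd_0_r x : Cadd x C0 = x. Proof. cring. Qed.
Lemma Cmul_0_l x : Cmul C0 x = C0. Proof. cring. Qed.
Lemma Cmul_0_r x : Cmul x C0 = C0. Proof. cring. Qed.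
Lemma Cmul_1_r x : Cmul x C1 = x. Proof. cring. Qed.
Lemma Cmul_assoc x y z : Cmul x (Cmul y z) = Cmul (Cmul x y) z. Proof. cring. Qed.
Lemma Cconj_add x y : Cconj (Cadd x y) = Cadd (Cconj x) (Cconj y). Proof. cring. Qed.
Lemma Cconj_mul x y : Cconj (Cmul x y) = Cmul (Cconj x) (Cconj y). Proof. cring. Qed.
Lemma Cconj_conj x : Cconj (Cconj x) = x. Proof. cring. Qed.
Lemma Csub_0_r x : Csub x C0 = x. Proof. cring. Qed.
Lemma Cscale_mul r x : Cscale r x = Cmul (mkC r 0) x. Proof. cring. Qed.
Lemma Cmul_conj_self x : Cmul x (Cconj x) = mkC (Cnorm2 x) 0. Proof. cring. Qed.
Lemma Cnorm2_mul a b : Cnorm2 (Cmul a b) = Cnorm2 a * Cnorm2 b.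
Proof. csimpl; ring. Qed.

Lemma Cpow_add x a b : Cpow x (a + b) = Cmul (Cpow x a) (Cpow x b).
Proof. induction a; simpl; [cring | rewrite IHa; apply Cmul_assoc]. Qed.

Lemma Cconj_pow x a : Cconj (Cpow x a) = Cpow (Cconj x) a.
Proof. induction a; simpl; [cring | now rewrite Cconj_mul, IHa]. Qed.

Lemma Cnorm2_eq0 x : Cnorm2 x = 0 -> x = C0.
Proof. destruct x as [a b]; unfold Cnorm2; simpl; intros H; apply Cplx_eq; simpl; nra. Qed.

Lemma Cnorm2_nz x : x <> C0 -> Cnorm2 x <> 0.
Proof. intros H E; apply H, Cnorm2_eq0, E. Qed.

Lemma Cinv_def x : Cinv x = Cscale (/ Cnorm2 x) (Cconj x).
Proof. unfold Cinv; apply Cplx_eq; simpl; unfold Rdiv; ring. Qed.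

Lemma Cmul_inv x : Cnorm2 x <> 0 -> Cmul x (Cinv x) = C1.
Proof. unfold Cinv, Cnorm2; intros H; apply Cplx_eq; simpl; field; auto. Qed.

Lemma Cinv_unit z : Cnorm2 z = 1 -> Cinv z = Cconj z.
Proof. intros H; unfold Cinv, Cconj; rewrite H; f_equal; field. Qed.

Lemma Cnorm2_pow z a : Cnorm2 z = 1 -> Cnorm2 (Cpow z a) = 1.
Proof. intros H; induction a; simpl; [csimpl; ring | rewrite Cnorm2_mul, H, IHa; ring]. Qed.

Lemma unit_pow z a : Cnorm2 z = 1 -> Cmul (Cpow z a) (Cconj (Cpow z a)) = C1.
Proof. intros H; rewrite Cmul_conj_self, Cnorm2_pow; auto. Qed.

Lemma unit_pow_sub z a b : Cnorm2 z = 1 -> (b <= a)%nat ->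
  Cpow z (a - b) = Cmul (Cpow z a) (Cconj (Cpow z b)).
Proof.
  intros H Hb; replace a with ((a - b) + b)%nat at 2 by lia.
  rewrite Cpow_add, <- Cmul_assoc, unit_pow; auto; symmetry; apply Cmul_1_r.
Qed.

Lemma csum_ext N f g : (forall i, (i <= N)%nat -> f i = g i) -> csum N f = csum N g.
Proof.
  induction N; intros H; simpl; [apply H; lia |].
  rewrite IHN by (intros; apply H; lia); rewrite H by lia; reflexivity.
Qed.

Lemma csum_add N f g : csum N (fun i => Cadd (f i) (g i)) = Cadd (csum N f) (csum N g).
Proof. induction N; simpl; [reflexivity | rewrite IHN; cring]. Qed.

Lemma csum_sub N f g : csum N (fun i => Csub (f i) (g i)) = Csub (csum N f) (csum N g).
Proof. induction N; simpl; [reflexivity | rewrite IHN; cring]. Qed.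

Lemma csum_mul_l N c f : Cmul c (csum N f) = csum N (fun i => Cmul c (f i)).
Proof. induction N; simpl; [reflexivity | rewrite <- IHN; cring]. Qed.

Lemma csum_mul_r N c f : Cmul (csum N f) c = csum N (fun i => Cmul (f i) c).
Proof. induction N; simpl; [reflexivity | rewrite <- IHN; cring]. Qed.

Lemma csum_conj N f : Cconj (csum N f) = csum N (fun i => Cconj (f i)).
Proof. induction N; simpl; [reflexivity | rewrite Cconj_add, IHN; reflexivity]. Qed.

Lemma csum_zero N f : (forall i, (i <= N)%nat -> f i = C0) -> csum N f = C0.
Proof.
  intros H; rewrite (csum_ext N f (fun _ => C0)) by auto; clear H.
  induction N; simpl; [reflexivity | rewrite IHN; cring].
Qed.

Lemma csum_swap N M f :
  csum N (fun i => csum M (fun j => f i j)) = csum M (fun j => csum N (fun i => f i j)).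
Proof. induction N; simpl; [reflexivity | rewrite IHN, <- csum_add; reflexivity]. Qed.

Lemma csum_first N f : csum (S N) f = Cadd (f O) (csum N (fun i => f (S i))).
Proof. induction N; simpl in *; [reflexivity | rewrite IHN; cring]. Qed.

Lemma csum_rev N f : csum N f = csum N (fun i => f (N - i)%nat).
Proof.
  revert f; induction N; intros f; [reflexivity |].
  rewrite csum_first; cbn [csum]; rewrite (IHN (fun i => f (S i))), Nat.sub_diag.
  rewrite (csum_ext N (fun i => f (S (N - i))) (fun i => f (S N - i)%nat)) by (intros; f_equal; lia).
  cring.
Qed.

Lemma csum_delta N a g :
  csum N (fun i => if Nat.eqb i a then g i else C0) = if Nat.leb a N then g a else C0.
Proof.
  induction N; [destruct a; reflexivity |].
  cbn [csum]; rewrite IHN.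
  destruct (Nat.eqb_spec (S N) a) as [<- | Hne].
  - rewrite (proj2 (Nat.leb_gt (S N) N)), Nat.leb_refl by lia; apply Cadd_0_l.
  - destruct (Nat.leb_spec a N), (Nat.leb_spec a (S N)); try lia; apply Cadd_0_r.
Qed.

Lemma csum_extend N M f : (N <= M)%nat -> (forall i, (N < i <= M)%nat -> f i = C0) ->
  csum N f = csum M f.
Proof.
  intros H Hz; induction M; [replace N with 0%nat by lia; reflexivity |].
  destruct (Nat.eq_dec N (S M)) as [-> | Hne]; [reflexivity |].
  cbn [csum]; rewrite <- IHM, Hz by (try lia; intros; apply Hz; lia); cring.
Qed.

Lemma csum_shift N t g : (t <= N)%nat ->
  csum N (fun j => if Nat.leb t j then g j else C0) = csum (N - t) (fun s => g (t + s)%nat).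
Proof.
  intros H; induction N; [replace t with 0%nat by lia; reflexivity |].
  destruct (Nat.eq_dec t (S N)) as [-> | Hne].
  - rewrite Nat.sub_diag; cbn [csum]; rewrite Nat.leb_refl, Nat.add_0_r, csum_zero; [apply Cadd_0_l |].
    intros i Hi; destruct (Nat.leb_spec (S N) i); [lia | reflexivity].
  - cbn [csum]; rewrite IHN by lia; replace (S N - t)%nat with (S (N - t)) by lia.
    cbn [csum]; rewrite (proj2 (Nat.leb_le t (S N))) by lia; do 2 f_equal; lia.
Qed.

Lemma csum_tri N k f : (k <= N)%nat ->
  csum N (fun j => csum (Nat.min j k) (fun t => f j t)) =
  csum k (fun t => csum (N - t) (fun s => f (t + s)%nat t)).
Proof.
  intros Hk.
  rewrite (csum_ext N _ (fun j => csum k (fun t => if Nat.leb t j then f j t else C0))).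
  { rewrite csum_swap; apply csum_ext; intros; apply csum_shift; lia. }
  intros j Hj; destruct (Nat.le_ge_cases j k).
  - rewrite Nat.min_l, <- (csum_extend j k) by
      (try lia; intros i Hi; rewrite (proj2 (Nat.leb_gt i j)) by lia; reflexivity).
    apply csum_ext; intros; rewrite (proj2 (Nat.leb_le _ _)) by lia; reflexivity.
  - rewrite Nat.min_r by lia.
    apply csum_ext; intros; rewrite (proj2 (Nat.leb_le _ _)) by lia; reflexivity.
Qed.

Notation CRI := Coquelicot.RInt.RInt.

Lemma RInt_agrees f a b : ex_RInt f a b -> Defs.RInt f a b = CRI f a b.
Proof.
  intros H; unfold Defs.RInt.
  assert (Hpr := ex_RInt_Reals_0 _ _ _ H).
  destruct (epsilon_spec (inhabits 0)
              (fun v => exists pr : Riemann_integrable f a b, RiemannInt pr = v)) as [pr Hv].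
  { exists (RiemannInt Hpr), Hpr; reflexivity. }
  rewrite <- Hv; symmetry; apply RInt_Reals.
Qed.

Definition cintegrable (F : R -> Cplx) a b :=
  ex_RInt (fun t => CRe (F t)) a b /\ ex_RInt (fun t => CIm (F t)) a b.

Definition ccontinuous (F : R -> Cplx) x :=
  continuous (fun t => CRe (F t)) x /\ continuous (fun t => CIm (F t)) x.

Lemma CInt_components F a b : cintegrable F a b ->
  CInt F a b = mkC (CRI (fun t => CRe (F t)) a b) (CRI (fun t => CIm (F t)) a b).
Proof. intros [H1 H2]; unfold CInt; now rewrite !RInt_agrees. Qed.

Lemma cintegrable_continuous F a b : (forall x, ccontinuous F x) -> cintegrable F a b.
Proof.
  intros H; split; apply (ex_RInt_continuous (V := R_CompleteNormedModule)); intros; apply H.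
Qed.

Lemma cintegrable_add F G a b : cintegrable F a b -> cintegrable G a b ->
  cintegrable (fun t => Cadd (F t) (G t)) a b.
Proof. intros [] []; split; apply (ex_RInt_plus (V := R_NormedModule)); auto. Qed.

Lemma cintegrable_sub F G a b : cintegrable F a b -> cintegrable G a b ->
  cintegrable (fun t => Csub (F t) (G t)) a b.
Proof. intros [] []; split; apply (ex_RInt_minus (V := R_NormedModule)); auto. Qed.

Lemma cintegrable_conj F a b : cintegrable F a b -> cintegrable (fun s => Cconj (F s)) a b.
Proof. intros [H1 H2]; split; simpl; auto; apply (ex_RInt_opp (V := R_NormedModule)); auto. Qed.

Lemma cintegrable_mulc c F a b : cintegrable F a b -> cintegrable (fun t => Cmul c (F t)) a b.
Proof.
  intros [H1 H2]; split; simpl;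
    [apply (ex_RInt_minus (V := R_NormedModule)) | apply (ex_RInt_plus (V := R_NormedModule))];
    apply (ex_RInt_scal (V := R_NormedModule)); auto.
Qed.

Lemma cintegrable_csum N F a b : (forall i, (i <= N)%nat -> cintegrable (F i) a b) ->
  cintegrable (fun t => csum N (fun i => F i t)) a b.
Proof.
  induction N; intros H; simpl; [apply H; lia |].
  apply cintegrable_add; [apply IHN; intros; apply H | apply H]; lia.
Qed.

Lemma CInt_add F G a b : cintegrable F a b -> cintegrable G a b ->
  CInt (fun t => Cadd (F t) (G t)) a b = Cadd (CInt F a b) (CInt G a b).
Proof.
  intros HF HG; rewrite !CInt_components by auto using cintegrable_add.
  destruct HF, HG; apply Cplx_eq; simpl; apply (RInt_plus (V := R_CompleteNormedModule)); auto.
Qed.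

Lemma CInt_sub F G a b : cintegrable F a b -> cintegrable G a b ->
  CInt (fun t => Csub (F t) (G t)) a b = Csub (CInt F a b) (CInt G a b).
Proof.
  intros HF HG; rewrite !CInt_components by auto using cintegrable_sub.
  destruct HF, HG; apply Cplx_eq; simpl; apply (RInt_minus (V := R_CompleteNormedModule)); auto.
Qed.

Lemma CInt_conj F a b : cintegrable F a b -> CInt (fun s => Cconj (F s)) a b = Cconj (CInt F a b).
Proof.
  intros HF; rewrite !CInt_components by auto using cintegrable_conj.
  destruct HF; apply Cplx_eq; simpl; [reflexivity | apply (RInt_opp (V := R_CompleteNormedModule)); auto].
Qed.

Lemma CInt_mulc c F a b : cintegrable F a b -> CInt (fun t => Cmul c (F t)) a b = Cmul c (CInt F a b).
Proof.
  intros HF; rewrite !CInt_components by auto using cintegrable_mulc.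
  destruct HF as [H1 H2]; apply Cplx_eq; simpl.
  - rewrite (RInt_minus (V := R_CompleteNormedModule))
      by (apply (ex_RInt_scal (V := R_NormedModule)); auto).
    rewrite !(RInt_scal (V := R_CompleteNormedModule)) by auto; reflexivity.
  - rewrite (RInt_plus (V := R_CompleteNormedModule))
      by (apply (ex_RInt_scal (V := R_NormedModule)); auto).
    rewrite !(RInt_scal (V := R_CompleteNormedModule)) by auto; reflexivity.
Qed.

Lemma CInt_csum N F a b : (forall i, (i <= N)%nat -> cintegrable (F i) a b) ->
  CInt (fun t => csum N (fun i => F i t)) a b = csum N (fun i => CInt (F i) a b).
Proof.
  induction N; intros H; simpl; [reflexivity |].
  rewrite CInt_add.
  - rewrite IHN; auto.
  - apply cintegrable_csum; intros; apply H; lia.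
  - apply H; lia.
Qed.

Lemma CInt_ext F G a b : (forall t, F t = G t) -> CInt F a b = CInt G a b.
Proof. intros H; replace F with G; auto; apply functional_extensionality; auto. Qed.

Lemma CInt_ext_on F G a b : cintegrable F a b ->
  (forall t, Rmin a b <= t <= Rmax a b -> F t = G t) -> CInt F a b = CInt G a b.
Proof.
  intros HF H.
  assert (HG : cintegrable G a b).
  { destruct HF as [H1 H2]; split.
    - apply (ex_RInt_ext (fun t => CRe (F t))); auto; intros; rewrite H; auto; lra.
    - apply (ex_RInt_ext (fun t => CIm (F t))); auto; intros; rewrite H; auto; lra. }
  rewrite !CInt_components by auto.
  apply Cplx_eq; simpl; apply RInt_ext; intros; rewrite H; auto; lra.
Qed.

Lemma CInt_0 a b : CInt (fun _ => C0) a b = C0.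
Proof.
  unfold CInt; simpl; rewrite RInt_agrees by apply ex_RInt_const.
  rewrite RInt_const; apply Cplx_eq; simpl; change (scal ?x ?y) with (x * y); ring.
Qed.

Definition ccont2 (F : R -> R -> Cplx) x y :=
  continuity_2d_pt (fun u v => CRe (F u v)) x y /\ continuity_2d_pt (fun u v => CIm (F u v)) x y.

Lemma ccont2_const c x y : ccont2 (fun _ _ => c) x y.
Proof. split; apply continuity_2d_pt_const. Qed.

Lemma ccont2_add F G x y : ccont2 F x y -> ccont2 G x y -> ccont2 (fun u v => Cadd (F u v) (G u v)) x y.
Proof. intros [] []; split; simpl; apply continuity_2d_pt_plus; auto. Qed.

Lemma ccont2_sub F G x y : ccont2 F x y -> ccont2 G x y -> ccont2 (fun u v => Csub (F u v) (G u v)) x y.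
Proof. intros [] []; split; simpl; apply continuity_2d_pt_minus; auto. Qed.

Lemma ccont2_mul F G x y : ccont2 F x y -> ccont2 G x y -> ccont2 (fun u v => Cmul (F u v) (G u v)) x y.
Proof.
  intros [] []; split; simpl;
    [apply continuity_2d_pt_minus | apply continuity_2d_pt_plus]; apply continuity_2d_pt_mult; auto.
Qed.

Lemma ccont2_conj F x y : ccont2 F x y -> ccont2 (fun u v => Cconj (F u v)) x y.
Proof. intros []; split; simpl; auto; apply continuity_2d_pt_opp; auto. Qed.

Lemma ccont2_scale r F x y : ccont2 F x y -> ccont2 (fun u v => Cscale r (F u v)) x y.
Proof. intros []; split; simpl; apply continuity_2d_pt_mult; auto; apply continuity_2d_pt_const. Qed.

Lemma ccont2_scalef (r : R -> R -> R) F x y : continuity_2d_pt r x y -> ccont2 F x y ->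
  ccont2 (fun u v => Cscale (r u v) (F u v)) x y.
Proof. intros ? []; split; simpl; apply continuity_2d_pt_mult; auto. Qed.

Lemma ccont2_pow F x y a : ccont2 F x y -> ccont2 (fun u v => Cpow (F u v) a) x y.
Proof. intros H; induction a; simpl; [apply ccont2_const | apply ccont2_mul; auto]. Qed.

Lemma ccont2_csum N F x y : (forall i, (i <= N)%nat -> ccont2 (F i) x y) ->
  ccont2 (fun u v => csum N (fun i => F i u v)) x y.
Proof.
  induction N; intros H; simpl; [apply H; lia |].
  apply ccont2_add; [apply IHN; intros |]; apply H; lia.
Qed.

Lemma ccont2_norm2 F x y : ccont2 F x y -> continuity_2d_pt (fun u v => Cnorm2 (F u v)) x y.
Proof. intros []; unfold Cnorm2; apply continuity_2d_pt_plus; apply continuity_2d_pt_mult; auto. Qed.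

Lemma ccont2_invnorm F x y : ccont2 F x y -> Cnorm2 (F x y) <> 0 ->
  continuity_2d_pt (fun u v => / Cnorm2 (F u v)) x y.
Proof. intros H Hn; apply continuity_2d_pt_inv; auto; apply ccont2_norm2; auto. Qed.

Lemma ccont2_inv F x y : ccont2 F x y -> Cnorm2 (F x y) <> 0 -> ccont2 (fun u v => Cinv (F u v)) x y.
Proof.
  intros H Hn; assert (Hc := ccont2_invnorm F x y H Hn); destruct H as [H1 H2].
  unfold Cinv; split; simpl; unfold Rdiv; apply continuity_2d_pt_mult; auto.
  apply continuity_2d_pt_opp; auto.
Qed.

Lemma cont2_comp1 (g : R -> R) x y : continuity g -> continuity_2d_pt (fun u _ => g u) x y.
Proof. intros Hg; apply (continuity_1d_2d_pt_comp g (fun u _ => u)); [apply Hg | apply continuity_2d_pt_id1]. Qed.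

Lemma cont2_comp2 (g : R -> R) x y : continuity g -> continuity_2d_pt (fun _ v => g v) x y.
Proof. intros Hg; apply (continuity_1d_2d_pt_comp g (fun _ v => v)); [apply Hg | apply continuity_2d_pt_id2]. Qed.

Lemma ccont2_expi1 x y : ccont2 (fun u _ => Cexpi u) x y.
Proof. split; simpl; apply cont2_comp1; [apply continuity_cos | apply continuity_sin]. Qed.

Lemma ccont2_expi2 x y : ccont2 (fun _ v => Cexpi v) x y.
Proof. split; simpl; apply cont2_comp2; [apply continuity_cos | apply continuity_sin]. Qed.

Ltac solve_ccont2 :=
  repeat first
    [ apply ccont2_mul | apply ccont2_add | apply ccont2_sub | apply ccont2_conj | apply ccont2_pow
    | apply ccont2_expi1 | apply ccont2_expi2 | apply ccont2_const
    | apply ccont2_csum; intros ].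

Lemma cont2_snd f x y : continuity_2d_pt f x y -> continuous (fun v => f x v) y.
Proof.
  intros H P [eps HP]; destruct (H eps) as [d Hd]; exists d; intros v Hv; apply HP, Hd; auto.
  rewrite Rminus_diag, Rabs_R0; apply cond_pos.
Qed.

Lemma param_cont (f : R -> R -> R) a b t0 : a <= b ->
  (forall s, a <= s <= b -> continuity_2d_pt f t0 s) ->
  (forall t s, continuous (fun v => f t v) s) ->
  continuous (fun t => CRI (f t) a b) t0.
Proof.
  intros Hab Hc Hs P [eps HP].
  assert (He : 0 < eps / (b - a + 1)) by (apply Rdiv_lt_0_compat; [apply cond_pos | lra]).
  destruct (uniform_continuity_2d_1d' f a b t0 Hc (mkposreal _ He)) as [d Hd].
  exists d; intros t Ht; apply HP.
  assert (Hex : forall t, ex_RInt (f t) a b)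
    by (intros; apply (ex_RInt_continuous (V := R_CompleteNormedModule)); intros; apply Hs).
  change (Rabs (minus (CRI (f t) a b) (CRI (f t0) a b)) < eps).
  rewrite <- (RInt_minus (V := R_CompleteNormedModule)) by auto.
  eapply Rle_lt_trans.
  - apply abs_RInt_le_const with (M := eps / (b - a + 1)); auto.
    + apply (ex_RInt_minus (V := R_NormedModule)); auto.
    + intros s Hs'; left; change (Rabs (f t s - f t0 s) < eps / (b - a + 1)).
      assert (Hts : Rabs (t - t0) < d) by exact Ht.
      apply (Hd s t0 s t); auto.
      * destruct d; simpl; lra.
      * apply Rabs_def2 in Hts; lra.
      * rewrite Rminus_diag, Rabs_R0; apply cond_pos.
  - assert (0 < eps) by apply cond_pos.
    apply Rmult_lt_reg_r with (b - a + 1); [lra |].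
    unfold Rdiv; rewrite Rmult_assoc, (Rmult_assoc eps), Rinv_l by lra; nra.
Qed.

Lemma RInt_zero_nonneg (g : R -> R) a b : a < b -> (forall x, continuous g x) ->
  (forall x, a <= x <= b -> 0 <= g x) -> CRI g a b = 0 -> forall x, a <= x <= b -> g x = 0.
Proof.
  intros Hab Hc Hp H0 x0 Hx0.
  destruct (Req_dec (g x0) 0) as [| Hne]; auto; exfalso.
  assert (Hpos : 0 < g x0) by (specialize (Hp x0 Hx0); lra).
  assert (Hex : forall u v, ex_RInt g u v)
    by (intros; apply (ex_RInt_continuous (V := R_CompleteNormedModule)); auto).
  assert (Hcx := Hc x0); apply continuity_pt_filterlim in Hcx; rewrite continuity_pt_locally in Hcx.
  assert (Hh : 0 < g x0 / 2) by lra.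
  destruct (Hcx (mkposreal _ Hh)) as [d Hd]; simpl in Hd.
  set (c := Rmax a (x0 - d / 2)); set (e := Rmin b (x0 + d / 2)).
  assert (Hd0 : 0 < d) by apply cond_pos.
  assert (Hc1 : a <= c) by apply Rmax_l.
  assert (He1 : e <= b) by apply Rmin_l.
  assert (Hce : c < e) by (unfold c, e; apply Rmax_lub_lt; apply Rmin_glb_lt; lra).
  assert (Hcx0 : x0 - d / 2 <= c) by apply Rmax_r.
  assert (Hex0 : e <= x0 + d / 2) by apply Rmin_r.
  assert (H1 : 0 <= CRI g a c) by (apply RInt_ge_0; auto; intros; apply Hp; lra).
  assert (H3 : 0 <= CRI g e b) by (apply RInt_ge_0; auto; intros; apply Hp; lra).
  assert (H2 : 0 < CRI g c e).
  { apply RInt_gt_0; auto; intros x Hx.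
    assert (Rabs (g x - g x0) < g x0 / 2)
      by (apply Hd; change (Rabs (x - x0) < d); apply Rabs_def1; lra).
    apply Rabs_def2 in H; lra. }
  rewrite <- (RInt_Chasles (V := R_CompleteNormedModule) g a c b) in H0 by auto.
  rewrite <- (RInt_Chasles (V := R_CompleteNormedModule) g c e b) in H0 by auto.
  change (CRI g a c + (CRI g c e + CRI g e b) = 0) in H0; lra.
Qed.

Definition iint (F : R -> R -> Cplx) : Cplx :=
  Cscale (/ (4 * PI ^ 2)) (CInt (fun t => CInt (fun s => F t s) (- PI) PI) (- PI) PI).

Lemma torus_int_iint F : torus_int F = iint (fun t s => F (Cexpi t) (Cexpi s)).
Proof. reflexivity. Qed.

Definition jointly_continuous (F : R -> R -> Cplx) := forall t s, ccont2 F t s.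

Lemma jc_re_snd F t s : jointly_continuous F -> continuous (fun v => CRe (F t v)) s.
Proof. intros H; apply (cont2_snd (fun u v => CRe (F u v))), H. Qed.

Lemma jc_im_snd F t s : jointly_continuous F -> continuous (fun v => CIm (F t v)) s.
Proof. intros H; apply (cont2_snd (fun u v => CIm (F u v))), H. Qed.

Lemma jc_inner_integrable F t a b : jointly_continuous F -> cintegrable (F t) a b.
Proof.
  intros H; apply cintegrable_continuous; intros x; split; [apply jc_re_snd | apply jc_im_snd]; auto.
Qed.

Lemma jc_outer_integrable F a b c d : a <= b -> jointly_continuous F ->
  cintegrable (fun t => CInt (F t) a b) c d.
Proof.
  intros Hab H; apply cintegrable_continuous; intros t; split.
  - apply (continuous_ext_loc _ (fun t => CRI (fun s => CRe (F t s)) a b)).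
    + apply filter_forall; intros y; rewrite CInt_components by (apply jc_inner_integrable; auto); auto.
    + apply (param_cont (fun u v => CRe (F u v))); auto; intros; try apply H; apply jc_re_snd; auto.
  - apply (continuous_ext_loc _ (fun t => CRI (fun s => CIm (F t s)) a b)).
    + apply filter_forall; intros y; rewrite CInt_components by (apply jc_inner_integrable; auto); auto.
    + apply (param_cont (fun u v => CIm (F u v))); auto; intros; try apply H; apply jc_im_snd; auto.
Qed.

Lemma PI_le : - PI <= PI.
Proof. pose proof PI_RGT_0; lra. Qed.

Lemma iint_ext F G : (forall t s, F t s = G t s) -> iint F = iint G.
Proof.
  intros H; replace F with G; auto.
  apply functional_extensionality; intros t; apply functional_extensionality; auto.
Qed.

Lemma iint_add F G : jointly_continuous F -> jointly_continuous G ->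
  iint (fun t s => Cadd (F t s) (G t s)) = Cadd (iint F) (iint G).
Proof.
  intros HF HG; unfold iint.
  rewrite (CInt_ext _ (fun t => Cadd (CInt (fun s => F t s) (-PI) PI) (CInt (fun s => G t s) (-PI) PI)))
    by (intros; apply CInt_add; apply jc_inner_integrable; auto).
  rewrite CInt_add by (apply jc_outer_integrable; auto; apply PI_le); cring.
Qed.

Lemma iint_sub F G : jointly_continuous F -> jointly_continuous G ->
  iint (fun t s => Csub (F t s) (G t s)) = Csub (iint F) (iint G).
Proof.
  intros HF HG; unfold iint.
  rewrite (CInt_ext _ (fun t => Csub (CInt (fun s => F t s) (-PI) PI) (CInt (fun s => G t s) (-PI) PI)))
    by (intros; apply CInt_sub; apply jc_inner_integrable; auto).
  rewrite CInt_sub by (apply jc_outer_integrable; auto; apply PI_le); cring.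
Qed.

Lemma iint_mulc c F : jointly_continuous F -> iint (fun t s => Cmul c (F t s)) = Cmul c (iint F).
Proof.
  intros HF; unfold iint.
  rewrite (CInt_ext _ (fun t => Cmul c (CInt (fun s => F t s) (-PI) PI)))
    by (intros; apply CInt_mulc; apply jc_inner_integrable; auto).
  rewrite CInt_mulc by (apply jc_outer_integrable; auto; apply PI_le); cring.
Qed.

Lemma iint_csum N F : (forall i, (i <= N)%nat -> jointly_continuous (F i)) ->
  iint (fun t s => csum N (fun i => F i t s)) = csum N (fun i => iint (F i)).
Proof.
  induction N; intros H; simpl; [reflexivity |].
  rewrite iint_add.
  - rewrite IHN; auto.
  - intros t s; apply ccont2_csum; intros; apply H; lia.
  - apply H; lia.
Qed.

Lemma iint_zero_nonneg F : jointly_continuous F ->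
  (forall t s, CIm (F t s) = 0 /\ 0 <= CRe (F t s)) -> CRe (iint F) = 0 ->
  forall t s, -PI <= t <= PI -> -PI <= s <= PI -> CRe (F t s) = 0.
Proof.
  intros HC Hp H0 t s Ht Hs.
  assert (HPI := PI_RGT_0).
  assert (Hcont : forall x, continuous (fun t => CRI (fun s => CRe (F t s)) (-PI) PI) x).
  { intros; apply (param_cont (fun u v => CRe (F u v))); try lra; intros; try apply HC; apply jc_re_snd; auto. }
  assert (Hout : CRI (fun t => CRI (fun s => CRe (F t s)) (-PI) PI) (-PI) PI = 0).
  { unfold iint in H0; simpl in H0.
    rewrite <- RInt_agrees by (apply (ex_RInt_continuous (V := R_CompleteNormedModule)); auto).
    replace (fun t => CRI (fun s => CRe (F t s)) (-PI) PI)
      with (fun t => CRe (CInt (fun s => F t s) (- PI) PI)).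
    - assert (/ (4 * PI ^ 2) <> 0) by (apply Rinv_neq_0_compat; nra).
      apply Rmult_integral in H0; destruct H0; auto; contradiction.
    - apply functional_extensionality; intros x.
      rewrite CInt_components by (apply jc_inner_integrable; auto); reflexivity. }
  assert (Hin : CRI (fun s => CRe (F t s)) (-PI) PI = 0).
  { apply (RInt_zero_nonneg _ (-PI) PI ltac:(lra) Hcont); auto; intros.
    apply RInt_ge_0; try lra.
    - apply (ex_RInt_continuous (V := R_CompleteNormedModule)); intros; apply jc_re_snd; auto.
    - intros; apply Hp. }
  apply (RInt_zero_nonneg (fun s => CRe (F t s)) (-PI) PI ltac:(lra)); auto.
  - intros; apply jc_re_snd; auto.
  - intros; apply Hp.
Qed.

(** * Fourier analysis on the unit circle *)

Lemma Cexpi_add a b : Cmul (Cexpi a) (Cexpi b) = Cexpi (a + b).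
Proof. apply Cplx_eq; unfold Cexpi, Cmul; simpl; rewrite ?cos_plus, ?sin_plus; ring. Qed.

Lemma Cconj_expi t : Cconj (Cexpi t) = Cexpi (- t).
Proof. apply Cplx_eq; unfold Cexpi, Cconj; simpl; rewrite ?cos_neg, ?sin_neg; ring. Qed.

Lemma Cnorm2_expi t : Cnorm2 (Cexpi t) = 1.
Proof. unfold Cnorm2, Cexpi; simpl; rewrite <- (sin2_cos2 t); unfold Rsqr; ring. Qed.

Lemma Cpow_expi t a : Cpow (Cexpi t) a = Cexpi (INR a * t).
Proof.
  induction a; cbn [Cpow].
  - apply Cplx_eq; unfold Cexpi, C1; simpl; rewrite Rmult_0_l; [rewrite cos_0 | rewrite sin_0]; auto.
  - rewrite IHa, Cexpi_add, S_INR; f_equal; ring.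
Qed.

Lemma PI_neq0 : PI <> 0.
Proof. pose proof PI_RGT_0; lra. Qed.

Lemma cintegrable_ccont2 (F : R -> Cplx) : (forall s, ccont2 (fun _ s => F s) 0 s) ->
  cintegrable F (-PI) PI.
Proof.
  intros H; apply cintegrable_continuous; intros x; split.
  - exact (cont2_snd (fun _ s => CRe (F s)) 0 x (proj1 (H x))).
  - exact (cont2_snd (fun _ s => CIm (F s)) 0 x (proj2 (H x))).
Qed.

Lemma continuous_trig_lin (g : R -> R) (r x : R) : continuity g ->
  continuous (fun t => g (r * t)) x.
Proof.
  intros Hg; apply continuity_pt_filterlim, (continuity_pt_comp (fun t => r * t) g); [| apply Hg].
  apply continuity_pt_mult; [apply continuity_pt_const; intros ? ? | apply continuity_pt_id]; auto.
Qed.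

Lemma RInt_primitive (f g : R -> R) :
  (forall t, is_derive f t (g t)) -> (forall t, continuous g t) ->
  CRI g (-PI) PI = f PI - f (-PI).
Proof.
  intros Hd Hc; apply is_RInt_unique, (is_RInt_derive (V := R_CompleteNormedModule)); auto.
Qed.

Lemma CInt_expi r : CInt (fun t => Cexpi (IZR r * t)) (-PI) PI =
  if Z.eqb r 0 then mkC (2 * PI) 0 else C0.
Proof.
  rewrite CInt_components
    by (apply cintegrable_continuous; split; apply continuous_trig_lin;
        [apply continuity_cos | apply continuity_sin]).
  destruct (Z.eqb_spec r 0) as [-> | Hr].
  - apply Cplx_eq; simpl.
    + rewrite (RInt_ext _ (fun _ => 1)) by (intros; rewrite Rmult_0_l; apply cos_0).
      rewrite RInt_const; change (scal (PI - - PI) 1) with ((PI - - PI) * 1); ring.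
    + rewrite (RInt_ext _ (fun _ => 0)) by (intros; rewrite Rmult_0_l; apply sin_0).
      rewrite RInt_const; change (scal (PI - - PI) 0) with ((PI - - PI) * 0); ring.
  - assert (Hr' : IZR r <> 0) by (apply not_0_IZR; auto).
    assert (Hsin : sin (IZR r * PI) = 0) by (apply sin_eq_0_1; eauto).
    apply Cplx_eq; simpl.
    + rewrite (RInt_primitive (fun t => sin (IZR r * t) / IZR r)).
      * rewrite Ropp_mult_distr_r_reverse, sin_neg, Hsin; field; auto.
      * intros; auto_derive; auto; field; auto.
      * intros; apply continuous_trig_lin, continuity_cos.
    + rewrite (RInt_primitive (fun t => - cos (IZR r * t) / IZR r)).
      * rewrite Ropp_mult_distr_r_reverse, cos_neg; field; auto.
      * intros; auto_derive; auto; field; auto.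
      * intros; apply continuous_trig_lin, continuity_sin.
Qed.

Lemma CInt_mono a b :
  CInt (fun t => Cmul (Cpow (Cexpi t) a) (Cconj (Cpow (Cexpi t) b))) (-PI) PI =
  if Nat.eqb a b then mkC (2 * PI) 0 else C0.
Proof.
  rewrite (CInt_ext _ (fun t => Cexpi (IZR (Z.of_nat a - Z.of_nat b) * t))).
  - rewrite CInt_expi.
    destruct (Nat.eqb_spec a b), (Z.eqb_spec (Z.of_nat a - Z.of_nat b) 0); auto; lia.
  - intros t; rewrite !Cpow_expi, Cconj_expi, Cexpi_add; f_equal.
    rewrite minus_IZR, <- !INR_IZR_INZ; ring.
Qed.

Lemma coef_extract N a V i0 : (i0 <= N)%nat ->
  (forall t, -PI <= t <= PI -> csum N (fun i => Cmul (a i) (Cpow (Cexpi t) i)) = V t) ->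
  a i0 = Cscale (/ (2 * PI)) (CInt (fun t => Cmul (V t) (Cconj (Cpow (Cexpi t) i0))) (-PI) PI).
Proof.
  intros Hi H.
  assert (Hint : forall i, cintegrable
            (fun t => Cmul (a i) (Cmul (Cpow (Cexpi t) i) (Cconj (Cpow (Cexpi t) i0)))) (-PI) PI)
    by (intros; apply cintegrable_mulc, cintegrable_ccont2; intros; solve_ccont2).
  rewrite <- (CInt_ext_on (fun t => csum N (fun i =>
                 Cmul (a i) (Cmul (Cpow (Cexpi t) i) (Cconj (Cpow (Cexpi t) i0)))))).
  - rewrite CInt_csum by auto.
    rewrite (csum_ext _ _ (fun i => if Nat.eqb i i0 then Cmul (a i) (mkC (2 * PI) 0) else C0)).
    + rewrite csum_delta, (proj2 (Nat.leb_le _ _)) by auto.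
      apply Cplx_eq; simpl; field; apply PI_neq0.
    + intros i _; rewrite CInt_mulc, CInt_mono by (apply cintegrable_ccont2; intros; solve_ccont2).
      destruct (Nat.eqb i i0); cring.
  - apply cintegrable_csum; auto.
  - intros t Ht; rewrite Rmin_left, Rmax_right in Ht by apply PI_le.
    rewrite <- H by auto; rewrite csum_mul_r; apply csum_ext; intros; cring.
Qed.

Lemma coef_zero N a :
  (forall t, -PI <= t <= PI -> csum N (fun i => Cmul (a i) (Cpow (Cexpi t) i)) = C0) ->
  forall i, (i <= N)%nat -> a i = C0.
Proof.
  intros H i Hi; rewrite (coef_extract N a (fun _ => C0) i Hi H).
  rewrite (CInt_ext _ (fun _ => C0)) by (intros; apply Cmul_0_l); rewrite CInt_0; cring.
Qed.

Lemma peval2_by_columns h N M z w : peval2 h N M z w =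
  csum M (fun j => Cmul (csum N (fun i => Cmul (h i j) (Cpow z i))) (Cpow w j)).
Proof.
  unfold peval2; rewrite csum_swap; apply csum_ext; intros.
  rewrite csum_mul_r; apply csum_ext; intros; cring.
Qed.

Lemma coef_zero2 h N M :
  (forall t s, -PI <= t <= PI -> -PI <= s <= PI -> peval2 h N M (Cexpi t) (Cexpi s) = C0) ->
  forall i j, (i <= N)%nat -> (j <= M)%nat -> h i j = C0.
Proof.
  intros H i j Hi Hj.
  apply (coef_zero N (fun i => h i j)); auto; intros t Ht.
  apply (coef_zero M (fun j => csum N (fun i => Cmul (h i j) (Cpow (Cexpi t) i)))); auto.
  intros s Hs; rewrite <- peval2_by_columns; apply H; auto.
Qed.

Definition cder (f : R -> Cplx) (x : R) (d : Cplx) :=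
  is_derive (fun t => CRe (f t)) x (CRe d) /\ is_derive (fun t => CIm (f t)) x (CIm d).

Lemma is_derive_Req (f : R -> R) (x d d' : R) : is_derive f x d -> d = d' -> is_derive f x d'.
Proof. intros H ->; auto. Qed.

Lemma is_derive_Rplus (f g : R -> R) (x df dg : R) :
  is_derive f x df -> is_derive g x dg -> is_derive (fun t => f t + g t) x (df + dg).
Proof. intros; apply (is_derive_plus (K := R_AbsRing) (V := R_NormedModule)); auto. Qed.

Lemma is_derive_Rminus (f g : R -> R) (x df dg : R) :
  is_derive f x df -> is_derive g x dg -> is_derive (fun t => f t - g t) x (df - dg).
Proof. intros; apply (is_derive_minus (K := R_AbsRing) (V := R_NormedModule)); auto. Qed.

Lemma is_derive_Ropp (f : R -> R) (x df : R) : is_derive f x df -> is_derive (fun t => - f t) x (- df).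
Proof. intros; apply (is_derive_opp (K := R_AbsRing) (V := R_NormedModule)); auto. Qed.

Lemma cder_eq f x d d' : cder f x d -> d = d' -> cder f x d'.
Proof. intros H ->; auto. Qed.

Lemma cder_const c x : cder (fun _ => c) x C0.
Proof. split; apply (is_derive_const (K := R_AbsRing) (V := R_NormedModule)). Qed.

Lemma cder_add f g x df dg : cder f x df -> cder g x dg ->
  cder (fun t => Cadd (f t) (g t)) x (Cadd df dg).
Proof. intros [] []; split; simpl; apply is_derive_Rplus; auto. Qed.

Lemma cder_mul f g x df dg : cder f x df -> cder g x dg ->
  cder (fun t => Cmul (f t) (g t)) x (Cadd (Cmul df (g x)) (Cmul (f x) dg)).
Proof.
  intros [H1 H2] [H3 H4]; split; simpl; eapply is_derive_Req.
  - apply is_derive_Rminus; apply is_derive_mult; eauto.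
  - simpl; ring.
  - apply is_derive_Rplus; apply is_derive_mult; eauto.
  - simpl; ring.
Qed.

Lemma cder_inv f x df : cder f x df -> Cnorm2 (f x) <> 0 ->
  cder (fun t => Cinv (f t)) x (Csub C0 (Cmul df (Cinv (Cmul (f x) (f x))))).
Proof.
  intros [H1 H2] Hn.
  assert (Hd : is_derive (fun t => Cnorm2 (f t)) x (2 * (CRe (f x) * CRe df + CIm (f x) * CIm df))).
  { unfold Cnorm2; eapply is_derive_Req.
    - apply is_derive_Rplus; apply is_derive_mult; eauto.
    - cbv beta; ring. }
  assert (Hsq : forall a b : R, a * a + b * b <> 0 ->
     (a * a - b * b) * (a * a - b * b) + (a * b + b * a) * (a * b + b * a) <> 0).
  { intros a b Hab; replace ((a * a - b * b) * (a * a - b * b) + (a * b + b * a) * (a * b + b * a))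
      with ((a * a + b * b) * (a * a + b * b)) by ring.
    intro E; apply Rmult_integral in E; tauto. }
  unfold Cinv at 1; split; cbn [CRe CIm]; eapply is_derive_Req.
  - apply is_derive_div; [exact H1 | exact Hd | exact Hn].
  - unfold Cinv, Csub, Cmul, C0, Cnorm2 in *; cbn [CRe CIm] in *.
    field; split; auto.
  - apply is_derive_div; [apply is_derive_Ropp; exact H2 | exact Hd | exact Hn].
  - unfold Cinv, Csub, Cmul, C0, Cnorm2 in *; cbn [CRe CIm] in *.
    field; split; auto.
Qed.

Lemma cder_pow f x df j : cder f x df ->
  cder (fun t => Cpow (f t) j) x (Cmul (Cscale (INR j) (Cpow (f x) (j - 1))) df).
Proof.
  intros H; induction j.
  - apply (cder_eq _ _ C0); [exact (cder_const C1 x) | change (INR 0) with 0; cring].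
  - apply (cder_eq _ _ _ _ (cder_mul _ _ _ _ _ H IHj)).
    destruct j.
    + change (INR 1) with 1; change (INR 0) with 0; cbn [Cpow Nat.sub]; cring.
    + replace (S (S j) - 1)%nat with (S j) by lia; replace (S j - 1)%nat with j by lia.
      change (Cpow (f x) (S j)) with (Cmul (f x) (Cpow (f x) j)).
      rewrite (S_INR (S j)); set (Pj := Cpow (f x) j); set (r := INR (S j)); cring.
Qed.

Lemma cder_csum N F x dF : (forall i, (i <= N)%nat -> cder (F i) x (dF i)) ->
  cder (fun t => csum N (fun i => F i t)) x (csum N dF).
Proof.
  induction N; intros H; simpl; [apply H; lia |].
  apply cder_add; [apply IHN; intros |]; apply H; lia.
Qed.

(** * The mean value property  int_circle w^r / q(w) = 0  (r >= 1, q zero-free on the disk) *)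

Definition upoly (c : nat -> Cplx) m x := csum m (fun j => Cmul (c j) (Cpow x j)).
Definition upoly_deriv (c : nat -> Cplx) m x :=
  csum m (fun j => Cmul (c j) (Cscale (INR j) (Cpow x (j - 1)))).
Definition mono_over r c m x := Cmul (Cpow x r) (Cinv (upoly c m x)).
Definition mono_over_deriv r c m x :=
  Cadd (Cmul (Cscale (INR r) (Cpow x (r - 1))) (Cinv (upoly c m x)))
       (Cmul (Cpow x r) (Csub C0 (Cmul (upoly_deriv c m x) (Cinv (Cmul (upoly c m x) (upoly c m x)))))).

Definition zero_free_disk (c : nat -> Cplx) m := forall x, Cnorm2 x <= 1 -> Cnorm2 (upoly c m x) <> 0.

Lemma cder_upoly c m f x df : cder f x df ->
  cder (fun t => upoly c m (f t)) x (Cmul (upoly_deriv c m (f x)) df).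
Proof.
  intros H; unfold upoly.
  apply (cder_eq _ _ _ _ (cder_csum m (fun j t => Cmul (c j) (Cpow (f t) j)) x
     (fun j => Cadd (Cmul C0 (Cpow (f x) j)) (Cmul (c j) (Cmul (Cscale (INR j) (Cpow (f x) (j - 1))) df)))
     (fun j _ => cder_mul _ _ _ _ _ (cder_const (c j) x) (cder_pow f x df j H)))).
  unfold upoly_deriv; rewrite csum_mul_r; apply csum_ext; intros; cring.
Qed.

Lemma cder_mono_over r c m f x df : cder f x df -> Cnorm2 (upoly c m (f x)) <> 0 ->
  cder (fun t => mono_over r c m (f t)) x (Cmul (mono_over_deriv r c m (f x)) df).
Proof.
  intros H Hn; unfold mono_over.
  apply (cder_eq _ _ _ _ (cder_mul _ _ _ _ _ (cder_pow f x df r H)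
     (cder_inv _ _ _ (cder_upoly c m f x df H) Hn))).
  unfold mono_over_deriv.
  set (A := Cinv (upoly c m (f x))); set (B := Cinv (Cmul (upoly c m (f x)) (upoly c m (f x)))).
  set (Q := upoly_deriv c m (f x)); set (P1 := Cpow (f x) (r - 1)); set (P2 := Cpow (f x) r); cring.
Qed.

Lemma ccont2_upoly c m F x y : ccont2 F x y -> ccont2 (fun u v => upoly c m (F u v)) x y.
Proof. intros H; unfold upoly; apply ccont2_csum; intros; apply ccont2_mul, ccont2_pow; auto; apply ccont2_const. Qed.

Lemma ccont2_mono_over r c m F x y : ccont2 F x y -> Cnorm2 (upoly c m (F x y)) <> 0 ->
  ccont2 (fun u v => mono_over r c m (F u v)) x y.
Proof.
  intros H Hn; unfold mono_over; apply ccont2_mul; [apply ccont2_pow; auto |].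
  apply (ccont2_inv (fun u v => upoly c m (F u v))); auto; apply ccont2_upoly; auto.
Qed.

Lemma ccont2_mono_over_deriv r c m F x y : ccont2 F x y -> Cnorm2 (upoly c m (F x y)) <> 0 ->
  ccont2 (fun u v => mono_over_deriv r c m (F u v)) x y.
Proof.
  intros H Hn; unfold mono_over_deriv; apply ccont2_add; apply ccont2_mul.
  - apply ccont2_scale, ccont2_pow; auto.
  - apply (ccont2_inv (fun u v => upoly c m (F u v))); auto; apply ccont2_upoly; auto.
  - apply ccont2_pow; auto.
  - apply ccont2_sub; [apply ccont2_const |]; apply ccont2_mul.
    + unfold upoly_deriv; apply ccont2_csum; intros; apply ccont2_mul; [apply ccont2_const |].
      apply ccont2_scale, ccont2_pow; auto.
    + apply (ccont2_inv (fun u v => Cmul (upoly c m (F u v)) (upoly c m (F u v)))).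
      * apply ccont2_mul; apply ccont2_upoly; auto.
      * rewrite Cnorm2_mul; intro E; apply Rmult_integral in E; tauto.
Qed.

Definition polar (u v : R) := mkC (u * cos v) (u * sin v).

Lemma cder_polar_radial u v : cder (fun t => polar t v) u (Cexpi v).
Proof. split; simpl; auto_derive; auto; ring. Qed.

Lemma cder_polar_angular u v : cder (fun t => polar u t) v (Cmul (mkC 0 u) (Cexpi v)).
Proof. split; simpl; auto_derive; auto; ring. Qed.

Lemma Cnorm2_polar u v : Cnorm2 (polar u v) = u * u.
Proof. unfold Cnorm2, polar; simpl; rewrite <- (Rmult_1_r (u * u)), <- (sin2_cos2 v); unfold Rsqr; ring. Qed.

Lemma ccont2_polar (g : R -> R -> R) x y : continuity_2d_pt g x y -> ccont2 (fun u v => polar (g u v) v) x y.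
Proof.
  intros H; split; simpl; apply continuity_2d_pt_mult; auto; apply cont2_comp2;
    [apply continuity_cos | apply continuity_sin].
Qed.

Lemma polar_1 v : polar 1 v = Cexpi v.
Proof. unfold polar, Cexpi; f_equal; ring. Qed.

Lemma is_derive_param (f df : R -> R -> R) (r0 a b d : R) : 0 < d ->
  (forall u v, Rabs (u - r0) < d -> is_derive (fun u => f u v) u (df u v)) ->
  (forall v, continuity_2d_pt df r0 v) ->
  (forall u v, continuous (fun v => f u v) v) ->
  is_derive (fun u => CRI (f u) a b) r0 (CRI (df r0) a b).
Proof.
  intros Hd Hder Hc Hcf.
  replace (CRI (df r0) a b) with (CRI (fun t => Derive (fun u => f u t) r0) a b).
  2:{ apply RInt_ext; intros; apply is_derive_unique, Hder; rewrite Rminus_diag, Rabs_R0; auto. }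
  apply (is_derive_RInt_param f a b r0).
  - exists (mkposreal d Hd); intros y Hy t _; exists (df y t); apply Hder; exact Hy.
  - intros t _; apply (continuity_2d_pt_ext_loc df); [| apply Hc].
    exists (mkposreal d Hd); intros u v Hu _; symmetry; apply is_derive_unique, Hder; exact Hu.
  - apply filter_forall; intros y; apply (ex_RInt_continuous (V := R_CompleteNormedModule)).
    intros; apply Hcf.
Qed.

(* A continuous retraction of R onto [0,1], used to extend the radial parameter. *)
Definition clamp (u : R) := let w := (1 + u - Rabs (1 - u)) / 2 in (w + Rabs w) / 2.

Lemma clamp_range u : 0 <= clamp u <= 1.
Proof.
  unfold clamp; cbv zeta; set (w := (1 + u - Rabs (1 - u)) / 2).
  assert (Hw : w <= 1)
    by (unfold w; destruct (Rle_dec u 1);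
        [rewrite (Rabs_pos_eq (1 - u)) by lra | rewrite (Rabs_left (1 - u)) by lra]; lra).
  destruct (Rle_dec 0 w); [rewrite (Rabs_pos_eq w) by lra | rewrite (Rabs_left w) by lra]; lra.
Qed.

Lemma clamp_id u : 0 <= u <= 1 -> clamp u = u.
Proof.
  intros H; unfold clamp; cbv zeta; rewrite (Rabs_pos_eq (1 - u)), Rabs_pos_eq by lra; field.
Qed.

Lemma clamp_cont u : continuity_pt clamp u.
Proof.
  assert (Hcst : forall a : R, continuity_pt (fun _ => a) u)
    by (intros; apply continuity_pt_const; intros ? ?; auto).
  assert (Hw : continuity_pt (fun u => (1 + u - Rabs (1 - u)) / 2) u).
  { apply continuity_pt_mult; auto; apply continuity_pt_minus.
    - apply continuity_pt_plus; auto; apply continuity_pt_id.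
    - apply (continuity_pt_comp (fun u => 1 - u) Rabs); [| apply Rcontinuity_abs].
      apply continuity_pt_minus; auto; apply continuity_pt_id. }
  unfold clamp; apply continuity_pt_mult; auto; apply continuity_pt_plus; auto.
  apply (continuity_pt_comp (fun u => (1 + u - Rabs (1 - u)) / 2) Rabs); auto; apply Rcontinuity_abs.
Qed.

Definition coordinate (pr : Cplx -> R) := pr = CRe \/ pr = CIm.

Lemma coordinate_ccont2 pr F x y : coordinate pr -> ccont2 F x y ->
  continuity_2d_pt (fun u v => pr (F u v)) x y.
Proof. intros Hpr []; destruct Hpr as [-> | ->]; auto. Qed.

Lemma coordinate_cder pr f x d : coordinate pr -> cder f x d -> is_derive (fun t => pr (f t)) x (pr d).
Proof. intros Hpr []; destruct Hpr as [-> | ->]; auto. Qed.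

Section MeanValue.

Variables (r : nat) (c : nat -> Cplx) (m : nat).
Hypothesis Hr : (1 <= r)%nat.
Hypothesis Hzf : zero_free_disk c m.

Lemma zero_free_polar u v : 0 <= u <= 1 -> Cnorm2 (upoly c m (polar u v)) <> 0.
Proof. intros Hu; apply Hzf; rewrite Cnorm2_polar; nra. Qed.

Definition angular_deriv rho v := Cmul (mono_over_deriv r c m (polar rho v)) (Cmul (mkC 0 rho) (Cexpi v)).

Lemma angular_deriv_ccont2 rho u v : 0 <= rho <= 1 -> ccont2 (fun _ v => angular_deriv rho v) u v.
Proof.
  intros Hrho; unfold angular_deriv; apply ccont2_mul; [| solve_ccont2].
  apply (ccont2_mono_over_deriv r c m (fun _ v => polar rho v)).
  - apply (ccont2_polar (fun _ _ => rho)), continuity_2d_pt_const.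
  - apply zero_free_polar; lra.
Qed.

(* A derivative with respect to the angle has zero mean over a period. *)
Lemma angular_deriv_mean pr rho : coordinate pr -> 0 < rho < 1 ->
  CRI (fun v => pr (angular_deriv rho v)) (-PI) PI = 0.
Proof.
  intros Hpr Hrho.
  rewrite (RInt_primitive (fun v => pr (mono_over r c m (polar rho v)))).
  - replace (polar rho PI) with (polar rho (- PI))
      by (unfold polar; rewrite cos_neg, sin_neg, sin_PI; apply Cplx_eq; simpl; ring).
    apply Rminus_diag_eq; reflexivity.
  - intros v; apply coordinate_cder, (cder_mono_over r c m (fun t => polar rho t)); auto;
      [apply cder_polar_angular | apply zero_free_polar; lra].
  - intros v; apply (cont2_snd (fun _ v => pr (angular_deriv rho v)) 0), coordinate_ccont2; auto.
    apply angular_deriv_ccont2; lra.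
Qed.

Definition circle_mean (pr : Cplx -> R) (u : R) : R :=
  CRI (fun v => pr (mono_over r c m (polar (clamp u) v))) (-PI) PI.

Lemma circle_mean_integrand_cont pr u v : coordinate pr ->
  continuity_2d_pt (fun u v => pr (mono_over r c m (polar (clamp u) v))) u v.
Proof.
  intros Hpr; apply coordinate_ccont2, (ccont2_mono_over r c m (fun u v => polar (clamp u) v)); auto.
  - apply (ccont2_polar (fun u _ => clamp u)), cont2_comp1; intros x; apply clamp_cont.
  - apply zero_free_polar, clamp_range.
Qed.

Lemma circle_mean_continuous pr u : coordinate pr -> continuity_pt (circle_mean pr) u.
Proof.
  intros Hpr.
  apply continuity_pt_filterlim, (param_cont (fun u v => pr (mono_over r c m (polar (clamp u) v)))).
  - apply PI_le.
  - intros; apply circle_mean_integrand_cont; auto.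
  - intros; apply (cont2_snd (fun u v => pr (mono_over r c m (polar (clamp u) v)))).
    apply circle_mean_integrand_cont; auto.
Qed.

Definition radial_deriv u v := Cmul (mono_over_deriv r c m (polar u v)) (Cexpi v).

Lemma radial_deriv_is_derive pr u v : coordinate pr -> 0 < u < 1 ->
  is_derive (fun u => pr (mono_over r c m (polar (clamp u) v))) u (pr (radial_deriv u v)).
Proof.
  intros Hpr Hu.
  apply (is_derive_ext_loc (fun t => pr (mono_over r c m (polar t v)))).
  - assert (He : 0 < Rmin u (1 - u)) by (apply Rmin_glb_lt; lra).
    exists (mkposreal _ He); intros y Hy; change (Rabs (y - u) < Rmin u (1 - u)) in Hy.
    apply Rabs_def2 in Hy; pose proof (Rmin_l u (1 - u)); pose proof (Rmin_r u (1 - u)).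
    rewrite clamp_id by lra; reflexivity.
  - apply coordinate_cder, (cder_mono_over r c m (fun t => polar t v)); auto;
      [apply cder_polar_radial | apply zero_free_polar; lra].
Qed.

(* The radial derivative is 1/(iu) times the angular one, so it has zero mean as well. *)
Lemma radial_deriv_mean pr u : coordinate pr -> 0 < u < 1 ->
  CRI (fun v => pr (radial_deriv u v)) (-PI) PI = 0.
Proof.
  intros Hpr Hu.
  assert (HA : forall pr', coordinate pr' -> ex_RInt (fun v => pr' (angular_deriv u v)) (-PI) PI).
  { intros pr' Hpr'; apply (ex_RInt_continuous (V := R_CompleteNormedModule)); intros z _.
    apply (cont2_snd (fun _ v => pr' (angular_deriv u v)) 0), coordinate_ccont2; auto.
    apply angular_deriv_ccont2; lra. }
  destruct Hpr as [-> | ->].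
  - rewrite (RInt_ext _ (fun v => / u * CIm (angular_deriv u v)))
      by (intros; unfold angular_deriv, radial_deriv; cbn [CRe CIm Cmul];
          match goal with |- ?a = ?b => change (@eq R a b) end; field; lra).
    rewrite (RInt_scal (V := R_CompleteNormedModule)) by (apply HA; right; reflexivity).
    change (scal ?a ?b) with (a * b).
    rewrite angular_deriv_mean by (try right; auto; lra); apply Rmult_0_r.
  - rewrite (RInt_ext _ (fun v => - / u * CRe (angular_deriv u v)))
      by (intros; unfold angular_deriv, radial_deriv; cbn [CRe CIm Cmul];
          match goal with |- ?a = ?b => change (@eq R a b) end; field; lra).
    rewrite (RInt_scal (V := R_CompleteNormedModule)) by (apply HA; left; reflexivity).
    change (scal ?a ?b) with (a * b).
    rewrite angular_deriv_mean by (try left; auto; lra); apply Rmult_0_r.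
Qed.

(* Differentiating under the integral sign, the circle mean is constant on (0,1). *)
Lemma circle_mean_derivative pr u : coordinate pr -> 0 < u < 1 -> is_derive (circle_mean pr) u 0.
Proof.
  intros Hpr Hu.
  assert (Hd0 : 0 < Rmin u (1 - u)) by (apply Rmin_glb_lt; lra).
  eapply is_derive_Req.
  - apply (is_derive_param _ (fun u v => pr (radial_deriv u v)) u (-PI) PI _ Hd0).
    + intros u' v Hu'; apply radial_deriv_is_derive; auto.
      apply Rabs_def2 in Hu'; pose proof (Rmin_l u (1 - u)); pose proof (Rmin_r u (1 - u)); lra.
    + intros v; apply coordinate_ccont2; auto; apply ccont2_mul; [| apply ccont2_expi2].
      apply (ccont2_mono_over_deriv r c m (fun u v => polar u v)).
      * apply (ccont2_polar (fun u _ => u)), continuity_2d_pt_id1.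
      * apply zero_free_polar; lra.
    + intros; apply (cont2_snd (fun u v => pr (mono_over r c m (polar (clamp u) v)))).
      apply circle_mean_integrand_cont; auto.
  - apply radial_deriv_mean; auto.
Qed.

Lemma circle_mean_0 pr : coordinate pr -> circle_mean pr 0 = 0.
Proof.
  intros Hpr; unfold circle_mean; rewrite (RInt_ext _ (fun _ => 0)).
  - rewrite RInt_const; change (scal ?a ?b) with (a * b); ring.
  - intros v _; rewrite clamp_id by lra; destruct r as [| r']; [lia |].
    unfold mono_over; cbn [Cpow].
    replace (polar 0 v) with C0 by (apply Cplx_eq; unfold polar; simpl; ring).
    rewrite !Cmul_0_l; destruct Hpr as [-> | ->]; reflexivity.
Qed.

(* By the mean value theorem, the mean over the unit circle equals the mean at radius 0. *)
Lemma mean_value_coordinate pr : coordinate pr ->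
  CRI (fun v => pr (mono_over r c m (Cexpi v))) (-PI) PI = 0.
Proof.
  intros Hpr.
  destruct (MVT_gen (circle_mean pr) 0 1 (fun _ => 0)) as [x [_ Hx]].
  - rewrite Rmin_left, Rmax_right by lra; intros; apply circle_mean_derivative; auto.
  - rewrite Rmin_left, Rmax_right by lra; intros; apply circle_mean_continuous; auto.
  - rewrite circle_mean_0, Rmult_0_l, Rminus_0_r in Hx by auto; rewrite <- Hx.
    unfold circle_mean; apply RInt_ext; intros; rewrite clamp_id, polar_1 by lra; reflexivity.
Qed.

End MeanValue.

Lemma mean_mono_over_poly r c m : (1 <= r)%nat -> zero_free_disk c m ->
  CInt (fun s => mono_over r c m (Cexpi s)) (-PI) PI = C0.
Proof.
  intros Hr Hzf.
  rewrite CInt_components.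
  - rewrite (mean_value_coordinate r c m Hr Hzf CRe), (mean_value_coordinate r c m Hr Hzf CIm);
      [reflexivity | right | left]; reflexivity.
  - apply cintegrable_ccont2; intros s.
    apply (ccont2_mono_over r c m (fun _ v => Cexpi v)); [apply ccont2_expi2 |].
    apply Hzf; rewrite Cnorm2_expi; lra.
Qed.

(** * Fourier coefficients of 1/q on the circle *)

Definition wfourier_integrand c m a b s :=
  Cmul (Cmul (Cpow (Cexpi s) a) (Cconj (Cpow (Cexpi s) b))) (Cinv (upoly c m (Cexpi s))).
Definition wfourier c m a b := CInt (wfourier_integrand c m a b) (-PI) PI.

Section WeightedFourier.

Variables (c : nat -> Cplx) (m : nat).
Hypothesis Hzf : zero_free_disk c m.

Lemma wfourier_integrable a b : cintegrable (wfourier_integrand c m a b) (-PI) PI.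
Proof.
  apply cintegrable_ccont2; intros s; unfold wfourier_integrand; apply ccont2_mul; [solve_ccont2 |].
  apply (ccont2_inv (fun _ s => upoly c m (Cexpi s))).
  - apply (ccont2_upoly c m (fun _ s => Cexpi s)), ccont2_expi2.
  - apply Hzf; rewrite Cnorm2_expi; lra.
Qed.

(* Positive frequencies are killed by the mean value property. *)
Lemma wfourier_above_diag a b : (b < a)%nat -> wfourier c m a b = C0.
Proof.
  intros Hab; unfold wfourier; rewrite <- (mean_mono_over_poly (a - b) c m) by (auto; lia).
  apply CInt_ext; intros s; unfold wfourier_integrand, mono_over.
  rewrite unit_pow_sub by (try apply Cnorm2_expi; lia); reflexivity.
Qed.

Lemma wfourier_shift a b l : wfourier c m (a + l) (b + l) = wfourier c m a b.
Proof.
  unfold wfourier; apply CInt_ext; intros s; unfold wfourier_integrand.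
  rewrite !Cpow_add, Cconj_mul.
  assert (U := unit_pow (Cexpi s) l (Cnorm2_expi s)).
  set (A := Cpow (Cexpi s) a) in *; set (B := Cpow (Cexpi s) b) in *; set (L := Cpow (Cexpi s) l) in *.
  transitivity (Cmul (Cmul (Cmul A (Cconj B)) (Cmul L (Cconj L))) (Cinv (upoly c m (Cexpi s)))).
  - cring.
  - rewrite U, Cmul_1_r; reflexivity.
Qed.

(* Multiplying back by q recovers the orthogonality of the characters. *)
Lemma wfourier_times_q a b :
  csum m (fun l => Cmul (c l) (wfourier c m (l + a) b)) = if Nat.eqb a b then mkC (2 * PI) 0 else C0.
Proof.
  rewrite <- CInt_mono; unfold wfourier.
  rewrite (csum_ext _ _ (fun l => CInt (fun s => Cmul (c l) (wfourier_integrand c m (l + a) b s)) (-PI) PI))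
    by (intros; rewrite CInt_mulc; auto; apply wfourier_integrable).
  rewrite <- CInt_csum by (intros; apply cintegrable_mulc, wfourier_integrable).
  apply CInt_ext; intros s; unfold wfourier_integrand.
  assert (E : Cmul (upoly c m (Cexpi s)) (Cinv (upoly c m (Cexpi s))) = C1)
    by (apply Cmul_inv, Hzf; rewrite Cnorm2_expi; lra).
  set (I := Cinv (upoly c m (Cexpi s))) in *.
  transitivity (Cmul (Cmul (Cmul (Cpow (Cexpi s) a) (Cconj (Cpow (Cexpi s) b))) (upoly c m (Cexpi s))) I).
  - unfold upoly; rewrite csum_mul_l, csum_mul_r; apply csum_ext; intros; rewrite Cpow_add; cring.
  - rewrite <- Cmul_assoc, E; apply Cmul_1_r.
Qed.

Lemma wfourier_delta k j : (k <= m)%nat ->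
  csum k (fun t => Cmul (c (k - t)%nat) (wfourier c m j t)) = if Nat.eqb j k then mkC (2 * PI) 0 else C0.
Proof.
  intros Hk; rewrite <- (wfourier_times_q j k), csum_rev.
  rewrite (csum_ext k _ (fun l => Cmul (c l) (wfourier c m (l + j) k))).
  - apply csum_extend; auto; intros l Hl; rewrite wfourier_above_diag by lia; apply Cmul_0_r.
  - intros l Hl; replace (k - (k - l))%nat with l by lia; f_equal.
    rewrite <- (wfourier_shift j (k - l) l); f_equal; lia.
Qed.

End WeightedFourier.

(** * Slice formulas for a_k and T_m on the torus *)

(* The "slice kernel"  p_a(z) conj p_b(z) - conj p_(m-a)(z) p_(m-b)(z)  (zero unless a,b <= m):
   restricted to |z| = 1, the numerator Q of L is z^n sum_(a,b) K(a,b) w^a conj(eta)^b. *)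
Definition slice_kernel n m P z a b :=
  if andb (Nat.leb a m) (Nat.leb b m) then
    Csub (Cmul (pw n P a z) (Cconj (pw n P b z))) (Cmul (Cconj (pw n P (m - a) z)) (pw n P (m - b) z))
  else C0.

Lemma reflection_column n m P z j : Cnorm2 z = 1 -> (j <= m)%nat ->
  csum n (fun i => Cmul (Pt n m P i j) (Cpow z i)) = Cmul (Cpow z n) (Cconj (pw n P (m - j) z)).
Proof.
  intros Hz Hj; unfold pw; rewrite csum_conj, csum_mul_l, csum_rev; apply csum_ext; intros i Hi.
  unfold Pt; rewrite (proj2 (Nat.leb_le (n - i) n)), (proj2 (Nat.leb_le j m)) by lia; simpl.
  replace (n - (n - i))%nat with i by lia.
  rewrite unit_pow_sub, Cconj_mul by (auto; lia); cring.
Qed.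

Lemma convolution_on_circle n X z : Cnorm2 z = 1 ->
  csum (2 * n) (fun i => Cmul (csum n (fun i1 => csum n (fun i2 =>
      if Nat.eqb (i1 + n) (i + i2) then X i1 i2 else C0))) (Cpow z i)) =
  csum n (fun i1 => csum n (fun i2 => Cmul (X i1 i2) (Cmul (Cpow z (i1 + n)) (Cconj (Cpow z i2))))).
Proof.
  intros Hz.
  rewrite (csum_ext _ _ (fun i => csum n (fun i1 => csum n (fun i2 =>
             if Nat.eqb i (i1 + n - i2) then Cmul (X i1 i2) (Cpow z i) else C0)))).
  - rewrite csum_swap; apply csum_ext; intros i1 Hi1; rewrite csum_swap; apply csum_ext; intros i2 Hi2.
    rewrite (csum_delta (2 * n) (i1 + n - i2) (fun i => Cmul (X i1 i2) (Cpow z i))).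
    rewrite (proj2 (Nat.leb_le _ _)) by lia; f_equal; apply unit_pow_sub; auto; lia.
  - intros i Hi; rewrite csum_mul_r; apply csum_ext; intros i1 Hi1.
    rewrite csum_mul_r; apply csum_ext; intros i2 Hi2.
    destruct (Nat.eqb_spec (i1 + n) (i + i2)), (Nat.eqb_spec i (i1 + n - i2)); try lia;
      [reflexivity | apply Cmul_0_l].
Qed.

Lemma qcoef_on_circle n m P z j l : Cnorm2 z = 1 ->
  csum (2 * n) (fun i => Cmul (qcoef n m P i j l) (Cpow z i)) = Cmul (Cpow z n) (slice_kernel n m P z j l).
Proof.
  intros Hz; unfold qcoef, slice_kernel.
  destruct (andb (Nat.leb j m) (Nat.leb l m)) eqn:Hjl.
  2:{ rewrite csum_zero; [cring | intros; apply Cmul_0_l]. }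
  apply Bool.andb_true_iff in Hjl; destruct Hjl as [Hj Hl]; apply Nat.leb_le in Hj, Hl.
  rewrite convolution_on_circle by auto.
  (* Each term factors as z^n times a product of two column evaluations. *)
  rewrite (csum_ext _ _ (fun i1 => Cmul (Cpow z n) (csum n (fun i2 =>
     Csub (Cmul (Cmul (P i1 j) (Cpow z i1)) (Cconj (Cmul (P i2 l) (Cpow z i2))))
          (Cmul (Cmul (Pt n m P i1 j) (Cpow z i1)) (Cconj (Cmul (Pt n m P i2 l) (Cpow z i2)))))))).
  2:{ intros; rewrite csum_mul_l; apply csum_ext; intros.
      rewrite Nat.add_comm, Cpow_add, !Cconj_mul; cring. }
  rewrite <- csum_mul_l; f_equal.
  rewrite (csum_ext _ _ (fun i1 =>
     Csub (Cmul (Cmul (P i1 j) (Cpow z i1)) (Cconj (pw n P l z)))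
          (Cmul (Cmul (Pt n m P i1 j) (Cpow z i1))
                (Cconj (csum n (fun i2 => Cmul (Pt n m P i2 l) (Cpow z i2))))))).
  2:{ intros; rewrite csum_sub; unfold pw; rewrite !csum_conj, !csum_mul_l; reflexivity. }
  rewrite csum_sub, <- !csum_mul_r, !reflection_column by auto; fold (pw n P j z).
  rewrite Cconj_mul, Cconj_conj.
  assert (U := unit_pow z n Hz).
  set (A := Cpow z n) in *; set (B := pw n P j z); set (C := pw n P l z).
  set (D := pw n P (m - j) z); set (E := pw n P (m - l) z).
  transitivity (Csub (Cmul B (Cconj C)) (Cmul (Cmul A (Cconj A)) (Cmul (Cconj D) E))); [cring |].
  rewrite U; cring.
Qed.

Lemma acoef_on_circle n m P k z j : Cnorm2 z = 1 ->
  csum (2 * n) (fun i => Cmul (acoef n m P k i j) (Cpow z i)) =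
  Cmul (Cpow z n) (csum (Nat.min j k) (fun t => slice_kernel n m P z (j - t) (k - t))).
Proof.
  intros Hz; unfold acoef.
  rewrite (csum_ext _ _ (fun i => csum (Nat.min j k) (fun t =>
             Cmul (qcoef n m P i (j - t) (k - t)) (Cpow z i)))) by (intros; apply csum_mul_r).
  rewrite csum_swap, csum_mul_l; apply csum_ext; intros; apply qcoef_on_circle; auto.
Qed.

(* The terms of a_k with w-degree j >= m cancel in pairs (exactness of the division by
   1 - w conj(eta)). *)
Lemma slice_kernel_cancel n m P z k j : (k < m)%nat -> (m <= j)%nat ->
  csum k (fun t => slice_kernel n m P z (j - t) (k - t)) = C0.
Proof.
  intros Hk Hj; set (d := (j - m)%nat).
  destruct (Nat.le_gt_cases d k) as [Hd | Hd].
  2:{ apply csum_zero; intros t Ht; unfold slice_kernel.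
      rewrite (proj2 (Nat.leb_gt (j - t) m)) by lia; reflexivity. }
  rewrite (csum_ext _ _ (fun t => if Nat.leb d t then slice_kernel n m P z (j - t) (k - t) else C0)).
  2:{ intros t Ht; destruct (Nat.leb_spec d t); auto; unfold slice_kernel.
      rewrite (proj2 (Nat.leb_gt (j - t) m)) by lia; reflexivity. }
  rewrite csum_shift by lia.
  set (X := fun u => Cmul (pw n P (m - u) z) (Cconj (pw n P (k - d - u) z))).
  rewrite (csum_ext _ _ (fun u => Csub (X u) (X (k - d - u)%nat))).
  - rewrite csum_sub, (csum_rev (k - d) (fun u => X (k - d - u)%nat)).
    rewrite (csum_ext (k - d) (fun i => X (k - d - (k - d - i))%nat) X) by (intros; f_equal; lia).
    apply Cplx_eq; simpl; ring.
  - intros u Hu; unfold slice_kernel.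
    rewrite (proj2 (Nat.leb_le (j - (d + u)) m)), (proj2 (Nat.leb_le (k - (d + u)) m)) by lia; simpl.
    unfold X.
    replace (j - (d + u))%nat with (m - u)%nat by lia.
    replace (k - (d + u))%nat with (k - d - u)%nat by lia.
    replace (m - (m - u))%nat with u by lia.
    replace (k - d - (k - d - u))%nat with u by lia; cring.
Qed.

Definition wslice n m P z := upoly (fun j => pw n P j z) m.

Lemma peval2_wslice n m P z w : peval2 P n m z w = wslice n m P z w.
Proof.
  unfold peval2, wslice, upoly, pw; rewrite csum_swap; apply csum_ext; intros.
  rewrite csum_mul_r; apply csum_ext; intros; cring.
Qed.

Lemma slice_kernel_wsum n m P z w b : Cnorm2 w = 1 -> (b <= m)%nat ->
  csum m (fun s => Cmul (Cpow w s) (slice_kernel n m P z s b)) =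
  Csub (Cmul (wslice n m P z w) (Cconj (pw n P b z)))
       (Cmul (Cmul (Cpow w m) (Cconj (wslice n m P z w))) (pw n P (m - b) z)).
Proof.
  intros Hw Hb.
  rewrite (csum_ext _ _ (fun s => Csub (Cmul (Cmul (pw n P s z) (Cpow w s)) (Cconj (pw n P b z)))
        (Cmul (Cmul (Cpow w s) (Cconj (pw n P (m - s) z))) (pw n P (m - b) z)))).
  2:{ intros s Hs; unfold slice_kernel.
      rewrite (proj2 (Nat.leb_le s m)), (proj2 (Nat.leb_le b m)) by lia; simpl; cring. }
  rewrite csum_sub, <- !csum_mul_r; f_equal; f_equal.
  unfold wslice, upoly; rewrite csum_conj, csum_mul_l, csum_rev; apply csum_ext; intros s Hs.
  rewrite unit_pow_sub by (auto; lia); replace (m - (m - s))%nat with s by lia.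
  rewrite Cconj_mul; cring.
Qed.

Lemma acoef_on_torus n m P k z w : (1 <= m)%nat -> (k <= m - 1)%nat -> Cnorm2 z = 1 -> Cnorm2 w = 1 ->
  peval2 (acoef n m P k) (2 * n) (m - 1) z w =
  Cmul (Cpow z n) (csum k (fun t => Cmul (Cpow w t)
     (Csub (Cmul (wslice n m P z w) (Cconj (pw n P (k - t) z)))
           (Cmul (Cmul (Cpow w m) (Cconj (wslice n m P z w))) (pw n P (m - (k - t)) z))))).
Proof.
  intros Hm Hk Hz Hw; rewrite peval2_by_columns.
  rewrite (csum_ext _ _ (fun j => Cmul (Cpow z n) (Cmul (Cpow w j)
             (csum (Nat.min j k) (fun t => slice_kernel n m P z (j - t) (k - t))))))
    by (intros; rewrite acoef_on_circle by auto; cring).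
  rewrite <- csum_mul_l; f_equal.
  rewrite (csum_extend (m - 1) (m + k)) by
      (try lia; intros j Hj; rewrite Nat.min_r, slice_kernel_cancel by lia; apply Cmul_0_r).
  rewrite (csum_ext _ _ (fun j => csum (Nat.min j k) (fun t => Cmul (Cpow w j)
             (slice_kernel n m P z (j - t) (k - t))))) by (intros; apply csum_mul_l).
  rewrite csum_tri by lia; apply csum_ext; intros t Ht.
  rewrite <- (csum_extend m (m + k - t)) by
      (try lia; intros s Hs; unfold slice_kernel; rewrite (proj2 (Nat.leb_gt (t + s - t) m)) by lia;
       apply Cmul_0_r).
  rewrite <- slice_kernel_wsum by (auto; lia); rewrite csum_mul_l; apply csum_ext; intros s Hs.
  replace (t + s - t)%nat with s by lia; rewrite Cpow_add; cring.
Qed.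

Lemma pbarw_on_circle n P j z : Cnorm2 z = 1 -> pbarw n P j (Cinv z) = Cconj (pw n P j z).
Proof.
  intros H; rewrite Cinv_unit by auto; unfold pbarw, pw; rewrite csum_conj; apply csum_ext; intros.
  rewrite Cconj_mul, Cconj_pow; reflexivity.
Qed.

Lemma Tm_diag_on_circle n m P z k : (1 <= m)%nat -> (k <= m - 1)%nat -> Cnorm2 z = 1 ->
  Tm n m P z k k = csum k (fun t => slice_kernel n m P z (k - t) (k - t)).
Proof.
  intros Hm Hk Hz; unfold Tm.
  rewrite <- (csum_extend k (m - 1)) by
      (try lia; intros u Hu; unfold M1, M2, M3, M4; rewrite (proj2 (Nat.leb_gt u k)) by lia; cring).
  apply csum_ext; intros u Hu; unfold M1, M2, M3, M4, slice_kernel.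
  rewrite (proj2 (Nat.leb_le u k)), (proj2 (Nat.leb_le (k - u) m)) by lia; simpl.
  rewrite !pbarw_on_circle by auto; replace (m - (k - u))%nat with (m - k + u)%nat by lia; cring.
Qed.

(** * The inner product of L^2(dsigma / |p|^2) *)

Definition torus_continuous (A : Cplx -> Cplx -> Cplx) := jointly_continuous (fun t s => A (Cexpi t) (Cexpi s)).

Lemma torus_continuous_poly a N M : torus_continuous (peval2 a N M).
Proof. intros t s; unfold peval2; solve_ccont2. Qed.

Lemma torus_continuous_monomial i j : torus_continuous (monomial i j).
Proof. intros t s; unfold monomial; solve_ccont2. Qed.

Section InnerProduct.

Variables (n m : nat) (P : nat -> nat -> Cplx).
Hypothesis Hs : stable n m P.

Lemma stable_slice z : Cnorm2 z <= 1 -> zero_free_disk (fun j => pw n P j z) m.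
Proof.
  intros Hz x Hx; change (Cnorm2 (wslice n m P z x) <> 0).
  rewrite <- peval2_wslice; apply Cnorm2_nz, Hs; auto.
Qed.

Lemma ip_integrand_continuous A B : torus_continuous A -> torus_continuous B ->
  jointly_continuous (fun t s => Cscale (/ Cnorm2 (peval2 P n m (Cexpi t) (Cexpi s)))
                                        (Cmul (A (Cexpi t) (Cexpi s)) (Cconj (B (Cexpi t) (Cexpi s))))).
Proof.
  intros HA HB t s; apply ccont2_scalef.
  - apply (ccont2_invnorm (fun t s => peval2 P n m (Cexpi t) (Cexpi s))); [apply torus_continuous_poly |].
    apply Cnorm2_nz, Hs; rewrite Cnorm2_expi; lra.
  - apply ccont2_mul, ccont2_conj; auto.
Qed.

Lemma ip_poly_r A b N M : torus_continuous A ->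
  ip n m P A (peval2 b N M) =
  csum N (fun i => csum M (fun j => Cmul (Cconj (b i j)) (ip n m P A (monomial i j)))).
Proof.
  intros HA; unfold ip; rewrite !torus_int_iint.
  assert (Hmono := fun i j => ip_integrand_continuous A (monomial i j) HA (torus_continuous_monomial i j)).
  rewrite (iint_ext _ (fun t s => csum N (fun i => csum M (fun j => Cmul (Cconj (b i j))
     (Cscale (/ Cnorm2 (peval2 P n m (Cexpi t) (Cexpi s)))
        (Cmul (A (Cexpi t) (Cexpi s)) (Cconj (monomial i j (Cexpi t) (Cexpi s))))))))).
  2:{ intros t s; unfold peval2 at 2.
      rewrite csum_conj, csum_mul_l, Cscale_mul, csum_mul_l; apply csum_ext; intros i _.
      rewrite csum_conj, csum_mul_l, csum_mul_l; apply csum_ext; intros j _.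
      unfold monomial; rewrite !Cconj_mul; cring. }
  rewrite iint_csum.
  2:{ intros i _ t s; apply ccont2_csum; intros j _; apply ccont2_mul; [apply ccont2_const | apply Hmono]. }
  apply csum_ext; intros i _; rewrite iint_csum.
  2:{ intros j _ t s; apply ccont2_mul; [apply ccont2_const | apply Hmono]. }
  apply csum_ext; intros j _; apply iint_mulc, Hmono.
Qed.

Lemma ip_sub_scaled_l A B c D : torus_continuous A -> torus_continuous B -> torus_continuous D ->
  ip n m P (fun z w => Csub (A z w) (Cmul c (B z w))) D = Csub (ip n m P A D) (Cmul c (ip n m P B D)).
Proof.
  intros HA HB HD; unfold ip; rewrite !torus_int_iint.
  rewrite <- iint_mulc, <- iint_sub by (try intros t s; try apply ccont2_mul; try apply ccont2_const;
                                       apply ip_integrand_continuous; auto).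
  apply iint_ext; intros t s; rewrite !Cscale_mul; cring.
Qed.

Lemma ip_scale A c : torus_continuous A ->
  ip n m P (fun z w => Cmul c (A z w)) (fun z w => Cmul c (A z w)) = Cmul (Cmul c (Cconj c)) (ip n m P A A).
Proof.
  intros HA; unfold ip; rewrite !torus_int_iint, <- iint_mulc by (apply ip_integrand_continuous; auto).
  apply iint_ext; intros; rewrite !Cscale_mul, Cconj_mul; cring.
Qed.

Lemma ip_definite A : torus_continuous A -> CRe (ip n m P A A) = 0 ->
  forall t s, -PI <= t <= PI -> -PI <= s <= PI -> A (Cexpi t) (Cexpi s) = C0.
Proof.
  intros HA H0 t s Ht Hs'; unfold ip in H0; rewrite torus_int_iint in H0.
  assert (HP : forall t s, 0 < Cnorm2 (peval2 P n m (Cexpi t) (Cexpi s))).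
  { intros t0 s0.
    assert (Hn := Cnorm2_nz _ (Hs (Cexpi t0) (Cexpi s0) ltac:(rewrite Cnorm2_expi; lra)
                                  ltac:(rewrite Cnorm2_expi; lra))).
    unfold Cnorm2 in *; destruct (peval2 P n m (Cexpi t0) (Cexpi s0)); simpl in *; nra. }
  assert (Z : CRe (Cscale (/ Cnorm2 (peval2 P n m (Cexpi t) (Cexpi s)))
                         (Cmul (A (Cexpi t) (Cexpi s)) (Cconj (A (Cexpi t) (Cexpi s))))) = 0).
  { apply (iint_zero_nonneg _ (ip_integrand_continuous A A HA HA)); auto.
    intros t0 s0; specialize (HP t0 s0); rewrite Cmul_conj_self; unfold Cscale; simpl; split; [ring |].
    apply Rmult_le_pos; [left; apply Rinv_0_lt_compat; auto | unfold Cnorm2; nra]. }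
  rewrite Cmul_conj_self in Z; unfold Cscale in Z; simpl in Z; specialize (HP t s).
  apply Rmult_integral in Z; destruct Z as [Z | Z].
  - exfalso; apply (Rinv_neq_0_compat _ (Rgt_not_eq _ _ HP)); auto.
  - apply Cnorm2_eq0; auto.
Qed.

Lemma poly_norm_zero h N M : CRe (ip n m P (peval2 h N M) (peval2 h N M)) = 0 ->
  forall i j, (i <= N)%nat -> (j <= M)%nat -> h i j = C0.
Proof. intros H; apply coef_zero2, ip_definite; auto; apply torus_continuous_poly. Qed.

Lemma poly_orthogonal_zero h N M :
  (forall i j, (i <= N)%nat -> (j <= M)%nat -> ip n m P (peval2 h N M) (monomial i j) = C0) ->
  forall i j, (i <= N)%nat -> (j <= M)%nat -> h i j = C0.
Proof.
  intros H; apply poly_norm_zero.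
  rewrite ip_poly_r by apply torus_continuous_poly.
  rewrite csum_zero; [reflexivity |]; intros i Hi; apply csum_zero; intros j Hj.
  rewrite H by auto; apply Cmul_0_r.
Qed.

End InnerProduct.

(** * Properties (a), (b), (c) of a_k, and uniqueness *)

Lemma csum_real N f : (forall i, (i <= N)%nat -> CIm (f i) = 0) -> CIm (csum N f) = 0.
Proof.
  induction N; intros Hf; simpl; [apply Hf; lia |].
  rewrite IHN by (intros; apply Hf; lia); rewrite Hf by lia; lra.
Qed.

Lemma peval2_ext f g N M z w : (forall i j, f i j = g i j) -> peval2 f N M z w = peval2 g N M z w.
Proof. intros H; unfold peval2; apply csum_ext; intros; apply csum_ext; intros; rewrite H; reflexivity. Qed.

Lemma peval2_sub_scaled f a c N M z w :
  peval2 (fun i j => Csub (f i j) (Cmul c (a i j))) N M z w =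
  Csub (peval2 f N M z w) (Cmul c (peval2 a N M z w)).
Proof.
  unfold peval2; rewrite csum_mul_l, <- csum_sub; apply csum_ext; intros.
  rewrite csum_mul_l, <- csum_sub; apply csum_ext; intros; cring.
Qed.

Lemma peval2_scaled f c N M z w : peval2 (fun i j => Cmul c (f i j)) N M z w = Cmul c (peval2 f N M z w).
Proof.
  unfold peval2; rewrite csum_mul_l; apply csum_ext; intros.
  rewrite csum_mul_l; apply csum_ext; intros; cring.
Qed.

Section Acoef.

Variables (n m : nat) (P : nat -> nat -> Cplx) (k : nat).
Hypothesis Hs : stable n m P.
Hypothesis Hm : (1 <= m)%nat.
Hypothesis Hk : (k <= m - 1)%nat.

Lemma acoef_ip_integrand z i j s : Cnorm2 z = 1 ->
  Cscale (/ Cnorm2 (peval2 P n m z (Cexpi s)))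
     (Cmul (peval2 (acoef n m P k) (2 * n) (m - 1) z (Cexpi s)) (Cconj (monomial i j z (Cexpi s)))) =
  Cmul (Cmul (Cpow z n) (Cconj (Cpow z i)))
    (csum k (fun t => Csub
       (Cconj (Cmul (pw n P (k - t) z) (wfourier_integrand (fun l => pw n P l z) m j t s)))
       (Cmul (pw n P (m - (k - t)) z) (wfourier_integrand (fun l => pw n P l z) m (m + t) j s)))).
Proof.
  intros Hz; rewrite acoef_on_torus by (auto; apply Cnorm2_expi).
  unfold wfourier_integrand, monomial; rewrite peval2_wslice; fold (wslice n m P z (Cexpi s)).
  set (w := Cexpi s); set (Q := wslice n m P z w).
  rewrite Cinv_def; fold Q.
  rewrite !Cscale_mul; repeat rewrite csum_mul_l; repeat rewrite csum_mul_r; repeat rewrite csum_mul_l.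
  apply csum_ext; intros t Ht; rewrite Cpow_add.
  set (r := / Cnorm2 Q); set (c1 := pw n P (k - t) z); set (c2 := pw n P (m - (k - t)) z).
  set (Wm := Cpow w m); set (Wt := Cpow w t); set (Wj := Cpow w j); set (Zn := Cpow z n).
  set (Zi := Cpow z i); cring.
Qed.

(* Integrating in w: by [wfourier_above_diag] and [wfourier_delta], only j = k survives. *)
Lemma acoef_ip_slice z i j : (j <= m - 1)%nat -> Cnorm2 z = 1 ->
  CInt (fun s => Cscale (/ Cnorm2 (peval2 P n m z (Cexpi s)))
     (Cmul (peval2 (acoef n m P k) (2 * n) (m - 1) z (Cexpi s)) (Cconj (monomial i j z (Cexpi s))))) (-PI) PI
  = if Nat.eqb j k then Cmul (mkC (2 * PI) 0) (Cmul (Cpow z n) (Cconj (Cpow z i))) else C0.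
Proof.
  intros Hj Hz; set (c := fun l => pw n P l z).
  assert (Hzf : zero_free_disk c m) by (apply stable_slice; auto; lra).
  assert (Hint := wfourier_integrable c m Hzf).
  rewrite (CInt_ext _ _ _ _ (fun s => acoef_ip_integrand z i j s Hz)); fold c.
  assert (Hterm : forall t, cintegrable (fun s =>
            Csub (Cconj (Cmul (c (k - t)%nat) (wfourier_integrand c m j t s)))
                 (Cmul (c (m - (k - t))%nat) (wfourier_integrand c m (m + t) j s))) (-PI) PI)
    by (intros; apply cintegrable_sub; [apply cintegrable_conj |]; apply cintegrable_mulc; auto).
  rewrite CInt_mulc by (apply cintegrable_csum; intros; apply Hterm).
  rewrite CInt_csum by (intros; apply Hterm).
  rewrite (csum_ext _ _ (fun t => Cconj (Cmul (c (k - t)%nat) (wfourier c m j t)))).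
  2:{ intros t Ht; rewrite CInt_sub by (try apply cintegrable_conj; apply cintegrable_mulc; auto).
      rewrite CInt_conj by (apply cintegrable_mulc; auto).
      rewrite !CInt_mulc by auto.
      change (CInt (wfourier_integrand c m (m + t) j) (-PI) PI) with (wfourier c m (m + t) j).
      rewrite wfourier_above_diag by (auto; lia); rewrite Cmul_0_r, Csub_0_r; reflexivity. }
  rewrite <- csum_conj, wfourier_delta by (auto; lia).
  destruct (Nat.eqb j k); cring.
Qed.

Lemma ip_acoef_monomial i j : (j <= m - 1)%nat ->
  ip n m P (peval2 (acoef n m P k) (2 * n) (m - 1)) (monomial i j) =
  if andb (Nat.eqb i n) (Nat.eqb j k) then C1 else C0.
Proof.
  intros Hj; unfold ip, torus_int.
  rewrite (CInt_ext _ (fun t => if Nat.eqb j k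
       then Cmul (mkC (2 * PI) 0) (Cmul (Cpow (Cexpi t) n) (Cconj (Cpow (Cexpi t) i))) else C0))
    by (intros t; apply acoef_ip_slice; auto; apply Cnorm2_expi).
  destruct (Nat.eqb j k).
  - rewrite CInt_mulc by (apply cintegrable_ccont2; intros; solve_ccont2).
    rewrite CInt_mono, Nat.eqb_sym; destruct (Nat.eqb i n); simpl; [| cring].
    apply Cplx_eq; simpl; field; apply PI_neq0.
  - rewrite CInt_0, Bool.andb_false_r; cring.
Qed.

Lemma acoef_support i j : (2 * n < i)%nat \/ (m - 1 < j)%nat -> acoef n m P k i j = C0.
Proof.
  assert (Hhigh : forall i j, (2 * n < i)%nat -> acoef n m P k i j = C0).
  { intros i' j' Hi; unfold acoef; apply csum_zero; intros t _; unfold qcoef.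
    destruct (andb _ _); auto; apply csum_zero; intros i1 Hi1; apply csum_zero; intros i2 Hi2.
    destruct (Nat.eqb_spec (i1 + n) (i' + i2)); auto; lia. }
  intros [Hi | Hj]; [auto |].
  destruct (Nat.le_gt_cases i (2 * n)) as [Hi | Hi]; [| auto].
  apply (coef_zero (2 * n) (fun i => acoef n m P k i j)); auto; intros t _.
  rewrite acoef_on_circle, Nat.min_r, slice_kernel_cancel by (try apply Cnorm2_expi; lia).
  apply Cmul_0_r.
Qed.

(* Fourier inversion in z: the central coefficient a_k[n,k] is the mean of T_kk. *)
Lemma acoef_center :
  acoef n m P k n k = Cscale (/ (2 * PI)) (CInt (fun t => Tm n m P (Cexpi t) k k) (-PI) PI).
Proof.
  rewrite (coef_extract (2 * n) (fun i => acoef n m P k i k)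
             (fun t => Cmul (Cpow (Cexpi t) n) (Tm n m P (Cexpi t) k k)) n); [| lia |].
  - f_equal; apply CInt_ext; intros t.
    assert (U := unit_pow (Cexpi t) n (Cnorm2_expi t)).
    set (Z := Cpow (Cexpi t) n) in *; set (T := Tm n m P (Cexpi t) k k).
    transitivity (Cmul (Cmul Z (Cconj Z)) T); [cring | rewrite U; cring].
  - intros t _; rewrite acoef_on_circle, Nat.min_id, Tm_diag_on_circle by (auto; apply Cnorm2_expi).
    reflexivity.
Qed.

(* T_kk is real on the circle, hence so is a_k[n,k]. *)
Lemma acoef_center_real : CIm (acoef n m P k n k) = 0.
Proof.
  rewrite acoef_center; unfold CInt, Cscale; simpl.
  rewrite (functional_extensionality (fun t => CIm (Tm n m P (Cexpi t) k k)) (fun _ => 0)).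
  - rewrite RInt_agrees, RInt_const by apply ex_RInt_const; change (scal ?x ?y) with (x * y); ring.
  - intros t; rewrite Tm_diag_on_circle by (auto; apply Cnorm2_expi).
    apply csum_real; intros i _; unfold slice_kernel; destruct (andb _ _); simpl; [ring | reflexivity].
Qed.

(* Expanding a_k in monomials, (b) gives ||a_k||^2 = conj a_k[n,k]. *)
Lemma ip_acoef_self :
  ip n m P (peval2 (acoef n m P k) (2 * n) (m - 1)) (peval2 (acoef n m P k) (2 * n) (m - 1)) =
  Cconj (acoef n m P k n k).
Proof.
  rewrite ip_poly_r by (auto; apply torus_continuous_poly).
  rewrite (csum_ext _ _ (fun i => if Nat.eqb i n then Cconj (acoef n m P k i k) else C0)).
  - rewrite csum_delta, (proj2 (Nat.leb_le _ _)) by lia; reflexivity.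
  - intros i Hi.
    rewrite (csum_ext _ _ (fun j => if Nat.eqb j k
                then (if Nat.eqb i n then Cconj (acoef n m P k i j) else C0) else C0)).
    + rewrite csum_delta, (proj2 (Nat.leb_le _ _)) by lia; reflexivity.
    + intros j Hj; rewrite ip_acoef_monomial by auto.
      destruct (Nat.eqb i n), (Nat.eqb j k); simpl; cring.
Qed.

Lemma acoef_norm :
  mkC (norm2 n m P (peval2 (acoef n m P k) (2 * n) (m - 1))) 0 =
  Cscale (/ (2 * PI)) (CInt (fun t => Tm n m P (Cexpi t) k k) (- PI) PI).
Proof.
  unfold norm2; rewrite ip_acoef_self, <- acoef_center.
  apply Cplx_eq; simpl; [reflexivity | rewrite acoef_center_real; ring].
Qed.

Lemma acoef_cond_abc : cond_abc n m P k (acoef n m P k).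
Proof.
  split; [| split; [| split]].
  - intros; apply acoef_support; auto.
  - intros i j Hi Hj Hjk; rewrite ip_acoef_monomial, (proj2 (Nat.eqb_neq j k) Hjk), Bool.andb_false_r;
      auto.
  - intros i Hi Hin; rewrite ip_acoef_monomial, (proj2 (Nat.eqb_neq i n) Hin); auto.
  - exact acoef_norm.
Qed.

(* Conditions (a) and (b) force f = c a_k with c = <f, z^n w^k>: the difference is a
   polynomial of the box orthogonal to all monomials of the box. *)
Lemma cond_abc_multiple f : cond_abc n m P k f ->
  forall i j, f i j = Cmul (ip n m P (peval2 f (2 * n) (m - 1)) (monomial n k)) (acoef n m P k i j).
Proof.
  intros [Ha [Hb1 [Hb2 _]]].
  set (G := peval2 f (2 * n) (m - 1)); set (c := ip n m P G (monomial n k)).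
  set (h := fun i j => Csub (f i j) (Cmul c (acoef n m P k i j))).
  assert (Hh0 : forall i j, (i <= 2 * n)%nat -> (j <= m - 1)%nat -> h i j = C0).
  { apply (poly_orthogonal_zero n m P Hs); intros i j Hi Hj.
    replace (peval2 h (2 * n) (m - 1))
      with (fun z w => Csub (G z w) (Cmul c (peval2 (acoef n m P k) (2 * n) (m - 1) z w)))
      by (do 2 (apply functional_extensionality; intro); symmetry; apply peval2_sub_scaled).
    rewrite ip_sub_scaled_l, ip_acoef_monomial
      by (auto; try apply torus_continuous_poly; apply torus_continuous_monomial).
    destruct (Nat.eqb_spec j k) as [-> | Hjk]; [destruct (Nat.eqb_spec i n) as [-> | Hin] |]; simpl.
    - fold c; cring.
    - rewrite Hb2 by auto; cring.
    - rewrite Bool.andb_false_r, Hb1 by auto; cring. }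
  intros i j.
  destruct (Nat.le_gt_cases i (2 * n)), (Nat.le_gt_cases j (m - 1));
    try (rewrite Ha, acoef_support by lia; cring).
  specialize (Hh0 i j H H0); unfold h in Hh0.
  rewrite <- (Cadd_0_l (Cmul c (acoef n m P k i j))), <- Hh0; cring.
Qed.

(* Uniqueness: by (c) the constant is unimodular (any constant works when a_k = 0). *)
Lemma cond_abc_unique f : cond_abc n m P k f ->
  exists c : Cplx, Cabs c = 1 /\ forall i j, f i j = Cmul c (acoef n m P k i j).
Proof.
  intros Hf; assert (Hfc := cond_abc_multiple f Hf).
  set (c := ip n m P (peval2 f (2 * n) (m - 1)) (monomial n k)) in Hfc.
  assert (Hre := acoef_center_real).
  destruct (Req_dec (CRe (acoef n m P k n k)) 0) as [H0 | H0].
  - (* a_k has norm zero, hence vanishes, and so does f *)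
    assert (Ha0 : forall i j, acoef n m P k i j = C0).
    { intros i j; destruct (Nat.le_gt_cases i (2 * n)), (Nat.le_gt_cases j (m - 1));
        try (apply acoef_support; lia).
      apply (poly_norm_zero n m P Hs (acoef n m P k) (2 * n) (m - 1)); auto.
      rewrite ip_acoef_self; simpl; exact H0. }
    exists C1; split.
    + unfold Cabs, Cnorm2, C1; simpl; replace (1 * 1 + 0 * 0) with 1 by ring; apply sqrt_1.
    + intros i j; rewrite Hfc, !Ha0; cring.
  - exists c; split; auto.
    (* ||f||^2 = |c|^2 ||a_k||^2 and both norms equal the mean of T_kk *)
    destruct Hf as [_ [_ [_ Hnorm]]].
    rewrite <- acoef_norm in Hnorm; apply (f_equal CRe) in Hnorm.
    change (CRe (ip n m P (peval2 f (2 * n) (m - 1)) (peval2 f (2 * n) (m - 1))) =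
            CRe (ip n m P (peval2 (acoef n m P k) (2 * n) (m - 1))
                          (peval2 (acoef n m P k) (2 * n) (m - 1)))) in Hnorm.
    replace (peval2 f (2 * n) (m - 1))
      with (fun z w => Cmul c (peval2 (acoef n m P k) (2 * n) (m - 1) z w)) in Hnorm
      by (do 2 (apply functional_extensionality; intro);
          rewrite <- peval2_scaled; apply peval2_ext; auto).
    rewrite ip_scale, ip_acoef_self in Hnorm by (auto; apply torus_continuous_poly).
    clearbody c; revert Hnorm H0 Hre; generalize (acoef n m P k n k); intros [x y] E H0 Hy.
    destruct c as [a b]; unfold Cmul, Cconj in E; simpl in E, H0, Hy; subst y.
    assert (Hn2 : a * a + b * b = 1) by (apply Rmult_eq_reg_r with x; auto; nra).
    unfold Cabs, Cnorm2; simpl; rewrite Hn2; apply sqrt_1.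
Qed.

End Acoef.

Theorem mainTheorem4 (n m : nat) (P : nat -> nat -> Cplx) (k : nat) :
  (1 <= n)%nat -> (1 <= m)%nat ->
  coeffs_bounded n m P -> exact_degree n m P -> stable n m P ->
  (k <= m - 1)%nat ->
  cond_abc n m P k (acoef n m P k) /\
  (forall f : nat -> nat -> Cplx, cond_abc n m P k f ->
     exists c : Cplx, Cabs c = 1 /\
       forall i j, f i j = Cmul c (acoef n m P k i j)).
Proof.
  intros _ Hm _ _ Hs Hk; split.
  - apply acoef_cond_abc; auto.
  - intros f Hf; apply cond_abc_unique; auto.
Qed.
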